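(* Fix $r>0$ and $\phi,\phi_0\in[0,2\pi)$. For $z\in\mathbb C$ define $$s(z)=\frac{1}{2\pi}\Big(p_{R|R_0}(r\mid z)+\sum_{m\in\mathbb Z\setminus\{0\}}C_m(r,z)\,e^{jm(\phi-\phi_0-\gamma z^2\mathcal L)}\Big).$$ Here $p_{R|R_0}(r\mid z)=\frac{2r}{\sigma^2\mathcal L}e^{-\frac{r^2+z^2}{\sigma^2\mathcal L}}I_0\big(\frac{2rz}{\sigma^2\mathcal L}\big)$. For $m\ge1$, $C_m(r,z)=r b_m e^{-a_m(r^2+z^2)}I_m(2b_m zr)$, and $C_{-m}(r,z)=r\overline{b_m}e^{-\overline{a_m}(r^2+z^2)}I_m(2\overline{b_m}zr)$. Then the series converges uniformly on every bounded subset of $\mathbb C$, and $s$ is an entire function of $z$. For real $z=r_0\ge0$, $s(r_0)=p(r,\phi\mid r_0,\phi_0)$.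
   Context: Fix constants $\gamma>0$, $\sigma>0$, $\mathcal L>0$, and let $j=\sqrt{-1}$. For $m\in\mathbb N$ define $$a_m=\frac{\sqrt{jm\gamma}}{\sigma}\coth\!\big(\sqrt{jm\gamma\sigma^2}\,\mathcal L\big),\qquad b_m=\frac{\sqrt{jm\gamma}}{\sigma}\,\frac{1}{\sinh\!\big(\sqrt{jm\gamma\sigma^2}\,\mathcal L\big)},$$ with principal square roots. $I_m$ denotes the modified Bessel function of the first kind of order $m$, and $\overline{w}$ denotes the complex conjugate of $w$. The PZD channel conditional density (input polar coordinates $(r_0,\phi_0)$, output polar coordinates $(r,\phi)$) is $$p(r,\phi\mid r_0,\phi_0)=\frac{1}{2\pi}p_{R|R_0}(r\mid r_0)+\frac1\pi\sum_{m\ge1}\Re\!\Big(C_m(r,r_0)\,e^{jm(\phi-\phi_0-\gamma r_0^2\mathcal L)}\Big),$$ with $p_{R|R_0}$ and $C_m$ ($m\ge1$) as in the claim evaluated at real $z=r_0$. *)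

From Stdlib Require Import Reals Lra Factorial ClassicalEpsilon.
Open Scope R_scope.

Record CC := mkC { Re : R ; Im : R }.

Definition RtoC (x : R) : CC := mkC x 0.
Definition C0 : CC := RtoC 0.
Definition C1 : CC := RtoC 1.
Definition Cj : CC := mkC 0 1.
Definition Cadd (z w : CC) : CC := mkC (Re z + Re w) (Im z + Im w).
Definition Copp (z : CC) : CC := mkC (- Re z) (- Im z).
Definition Csub (z w : CC) : CC := Cadd z (Copp w).
Definition Cmul (z w : CC) : CC :=
  mkC (Re z * Re w - Im z * Im w) (Re z * Im w + Im z * Re w).
Definition Cinv (z : CC) : CC :=
  let d := Re z * Re z + Im z * Im z in mkC (Re z / d) (- Im z / d).
Definition Cdiv (z w : CC) : CC := Cmul z (Cinv w).
Definition Cconj (z : CC) : CC := mkC (Re z) (- Im z).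
Definition Cnorm (z : CC) : R := sqrt (Re z * Re z + Im z * Im z).
Fixpoint Cpow (z : CC) (n : nat) : CC :=
  match n with O => C1 | S n' => Cmul z (Cpow z n') end.

Definition Cexp (z : CC) : CC := mkC (exp (Re z) * cos (Im z)) (exp (Re z) * sin (Im z)).
Definition Csinh (z : CC) : CC := Cdiv (Csub (Cexp z) (Cexp (Copp z))) (RtoC 2).
Definition Ccosh (z : CC) : CC := Cdiv (Cadd (Cexp z) (Cexp (Copp z))) (RtoC 2).
Definition Ccoth (z : CC) : CC := Cdiv (Ccosh z) (Csinh z).

(* principal square root (branch cut on the negative real axis, Re >= 0) *)
Definition Csqrt (w : CC) : CC :=
  mkC (sqrt ((Cnorm w + Re w) / 2))
      ((if Rle_dec 0 (Im w) then 1 else -1) * sqrt ((Cnorm w - Re w) / 2)).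

Definition C_cv (u : nat -> CC) (l : CC) : Prop :=
  forall eps, eps > 0 -> exists N, forall n, (n >= N)%nat -> Cnorm (Csub (u n) l) < eps.

Fixpoint Csum (f : nat -> CC) (n : nat) : CC :=
  match n with O => C0 | S n' => Cadd (Csum f n') (f n') end.

Definition besselI_term (m : nat) (w : CC) (k : nat) : CC :=
  Cmul (RtoC (/ (INR (fact k) * INR (fact (k + m)))))
       (Cpow (Cdiv w (RtoC 2)) (2 * k + m)).
Definition besselI (m : nat) (w : CC) : CC :=
  epsilon (inhabits C0) (fun l => C_cv (fun n => Csum (besselI_term m w) n) l).

Section Channel.
Variables (gamma sigma LL : R).

Definition jmg (m : nat) : CC := mkC 0 (INR m * gamma).
Definition a_coef (m : nat) : CC :=
  Cmul (Cdiv (Csqrt (jmg m)) (RtoC sigma))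
       (Ccoth (Cmul (Csqrt (Cmul (jmg m) (RtoC (sigma * sigma)))) (RtoC LL))).
Definition b_coef (m : nat) : CC :=
  Cmul (Cdiv (Csqrt (jmg m)) (RtoC sigma))
       (Cinv (Csinh (Cmul (Csqrt (Cmul (jmg m) (RtoC (sigma * sigma)))) (RtoC LL)))).

Definition pRR0 (r : R) (z : CC) : CC :=
  let s2L := sigma * sigma * LL in
  Cmul (RtoC (2 * r / s2L))
   (Cmul (Cexp (Cdiv (Copp (Cadd (RtoC (r * r)) (Cmul z z))) (RtoC s2L)))
         (besselI 0 (Cdiv (Cmul (RtoC (2 * r)) z) (RtoC s2L)))).

Definition Cpos (m : nat) (r : R) (z : CC) : CC :=
  Cmul (RtoC r) (Cmul (b_coef m)
   (Cmul (Cexp (Copp (Cmul (a_coef m) (Cadd (RtoC (r * r)) (Cmul z z)))))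
         (besselI m (Cmul (Cmul (RtoC 2) (b_coef m)) (Cmul z (RtoC r)))))).
Definition Cneg (m : nat) (r : R) (z : CC) : CC :=
  Cmul (RtoC r) (Cmul (Cconj (b_coef m))
   (Cmul (Cexp (Copp (Cmul (Cconj (a_coef m)) (Cadd (RtoC (r * r)) (Cmul z z)))))
         (besselI m (Cmul (Cmul (RtoC 2) (Cconj (b_coef m))) (Cmul z (RtoC r)))))).

Definition phase (k : R) (phi phi0 : R) (z : CC) : CC :=
  Cexp (Cmul (Cmul Cj (RtoC k))
    (Csub (RtoC (phi - phi0)) (Cmul (RtoC (gamma * LL)) (Cmul z z)))).

Definition term_pos (r phi phi0 : R) (z : CC) (m : nat) : CC :=
  Cmul (Cpos m r z) (phase (INR m) phi phi0 z).
Definition term_neg (r phi phi0 : R) (z : CC) (m : nat) : CC :=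
  Cmul (Cneg m r z) (phase (- INR m) phi phi0 z).

Definition psum_pos (r phi phi0 : R) (z : CC) (N : nat) : CC :=
  Csum (fun k => term_pos r phi phi0 z (S k)) N.
Definition psum_neg (r phi phi0 : R) (z : CC) (N : nat) : CC :=
  Csum (fun k => term_neg r phi phi0 z (S k)) N.

Definition pzd_psum (r phi phi0 r0 : R) (N : nat) : R :=
  Re (pRR0 r (RtoC r0)) / (2 * PI) + Re (psum_pos r phi phi0 (RtoC r0) N) / PI.

End Channel.

Definition unif_cv_disc (F : nat -> CC -> CC) (f : CC -> CC) (M : R) : Prop :=
  forall eps, eps > 0 -> exists N0, forall N z, (N >= N0)%nat -> Cnorm z <= M ->
    Cnorm (Csub (F N z) (f z)) < eps.

Definition entire (f : CC -> CC) : Prop :=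
  forall z0, exists l, forall eps, eps > 0 -> exists delta, delta > 0 /\
    forall h, 0 < Cnorm h < delta ->
      Cnorm (Csub (Cdiv (Csub (f (Cadd z0 h)) (f z0)) h) l) < eps.

(* On a disc |z| <= X the m-th term r b_m e^{-a_m (r^2 + z^2)} I_m(2 b_m z r) e^{j m (...)}
   of the series is controlled by three facts: |a_m| and |b_m| are O(sqrt m), because coth
   and 1/sinh stay bounded once the real part of their argument exceeds L sqrt(gamma sigma^2/2);
   |I_m(w)| <= (|w|/2)^m / m! e^{|w|^2/4}; and |e^{...}| grows at most like e^{c m}. Hence the
   terms, and likewise their derivatives, are dominated by m^2 e^{c m} (A sqrt m)^m / m!, which
   is summable because m^m / m! <= e^m. The Weierstrass M-test gives uniform convergence on
   discs, and a uniform limit of holomorphic functions whose derivatives also converge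
   uniformly is holomorphic (by the mean value inequality), so s is entire. On the real axis
   the terms of index -m are the conjugates of those of index m, so s(r0) is the PZD density. *)

From Pilot Require Import Defs.
From Stdlib Require Import Reals Lra Lia Psatz Field Ring ClassicalEpsilon Factorial.
(* [Reals] exports its own [C0] and [C1] (classes of smooth functions). *)
Notation C1 := Defs.C1.
Notation C0 := Defs.C0.
Open Scope R_scope.

Lemma CC_ext z w : Re z = Re w -> Im z = Im w -> z = w.
Proof. destruct z, w; simpl; intros; subst; reflexivity. Qed.

Lemma CC_ring : ring_theory C0 C1 Cadd Cmul Csub Copp (@eq CC).
Proof. constructor; intros; try reflexivity; apply CC_ext; simpl; ring. Qed.

Lemma CC_field : field_theory C0 C1 Cadd Cmul Csub Copp Cdiv Cinv (@eq CC).
Proof.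
  constructor.
  - exact CC_ring.
  - intro H. apply (f_equal Re) in H. simpl in H. lra.
  - reflexivity.
  - intros [a b] Hz.
    assert (Hd : a * a + b * b <> 0).
    { intro H0. apply Hz. apply CC_ext; simpl; nra. }
    apply CC_ext; simpl; field; exact Hd.
Qed.

Add Field CC_field_inst : CC_field.

Lemma RtoC_add a b : RtoC (a + b) = Cadd (RtoC a) (RtoC b).
Proof. apply CC_ext; simpl; ring. Qed.

Lemma Cconj_mul z w : Cconj (Cmul z w) = Cmul (Cconj z) (Cconj w).
Proof. apply CC_ext; simpl; ring. Qed.
Lemma Cconj_sub z w : Cconj (Csub z w) = Csub (Cconj z) (Cconj w).
Proof. apply CC_ext; simpl; ring. Qed.
Lemma Cconj_RtoC x : Cconj (RtoC x) = RtoC x.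
Proof. apply CC_ext; simpl; ring. Qed.
Lemma Cconj_inv z : Cconj (Cinv z) = Cinv (Cconj z).
Proof.
  destruct z as [a b]; apply CC_ext; simpl;
    replace (a * a + - b * - b) with (a * a + b * b) by ring; unfold Rdiv; ring.
Qed.
Lemma Cconj_div z w : Cconj (Cdiv z w) = Cdiv (Cconj z) (Cconj w).
Proof. unfold Cdiv. rewrite Cconj_mul, Cconj_inv. reflexivity. Qed.
Lemma Cconj_pow z n : Cconj (Cpow z n) = Cpow (Cconj z) n.
Proof. induction n; simpl; [apply Cconj_RtoC | rewrite Cconj_mul, IHn; reflexivity]. Qed.
Lemma Cconj_Csum f n : Cconj (Csum f n) = Csum (fun k => Cconj (f k)) n.
Proof.
  induction n; simpl; [apply Cconj_RtoC |].
  rewrite <- IHn. apply CC_ext; simpl; ring.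
Qed.
Lemma Cexp_conj z : Cexp (Cconj z) = Cconj (Cexp z).
Proof. apply CC_ext; simpl; [rewrite cos_neg | rewrite sin_neg]; ring. Qed.
Lemma Cexp_add z w : Cexp (Cadd z w) = Cmul (Cexp z) (Cexp w).
Proof. apply CC_ext; simpl; rewrite exp_plus; [rewrite cos_plus | rewrite sin_plus]; ring. Qed.

Lemma exp_le_compat x y : x <= y -> exp x <= exp y.
Proof. intros [H | H]; [left; apply exp_increasing, H | subst; right; reflexivity]. Qed.

Lemma Cnorm_ge0 z : 0 <= Cnorm z.
Proof. apply sqrt_pos. Qed.

Lemma Cnorm_sq z : Cnorm z * Cnorm z = Re z * Re z + Im z * Im z.
Proof. apply sqrt_sqrt. nra. Qed.

Lemma Cnorm_eq_sq z x : 0 <= x -> x * x = Re z * Re z + Im z * Im z -> Cnorm z = x.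
Proof. intros Hx H. unfold Cnorm. rewrite <- H. apply sqrt_square, Hx. Qed.

Lemma Cnorm_le_sq z x : 0 <= x -> Re z * Re z + Im z * Im z <= x * x -> Cnorm z <= x.
Proof. intros Hx H. unfold Cnorm. rewrite <- (sqrt_square x Hx). apply sqrt_le_1_alt, H. Qed.

Lemma Cnorm_ge_sq z x : 0 <= x -> x * x <= Re z * Re z + Im z * Im z -> x <= Cnorm z.
Proof. intros Hx H. rewrite <- (sqrt_square x Hx). apply sqrt_le_1_alt, H. Qed.

Lemma Cnorm_mul z w : Cnorm (Cmul z w) = Cnorm z * Cnorm w.
Proof.
  apply Cnorm_eq_sq; [apply Rmult_le_pos; apply Cnorm_ge0 |].
  replace (Cnorm z * Cnorm w * (Cnorm z * Cnorm w))
    with ((Cnorm z * Cnorm z) * (Cnorm w * Cnorm w)) by ring.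
  rewrite !Cnorm_sq. simpl. ring.
Qed.

Lemma Cnorm_add z w : Cnorm (Cadd z w) <= Cnorm z + Cnorm w.
Proof.
  pose proof (Cnorm_sq z) as Hz. pose proof (Cnorm_sq w) as Hw.
  pose proof (Cnorm_ge0 z). pose proof (Cnorm_ge0 w).
  apply Cnorm_le_sq; [lra |].
  set (nz := Cnorm z) in *. set (nw := Cnorm w) in *. clearbody nz nw.
  destruct z as [a b], w as [c d]; simpl in *.
  (* Cauchy-Schwarz: (ac + bd)^2 <= (a^2 + b^2)(c^2 + d^2) *)
  assert (a * c + b * d <= nz * nw).
  { destruct (Rle_lt_dec (a * c + b * d) 0); [nra |].
    apply Rsqr_incr_0_var; [unfold Rsqr | nra].
    replace (nz * nw * (nz * nw)) with ((nz * nz) * (nw * nw)) by ring.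
    rewrite Hz, Hw. pose proof (Rle_0_sqr (a * d - b * c)); unfold Rsqr in *; nra. }
  nra.
Qed.

Lemma Cnorm_opp z : Cnorm (Copp z) = Cnorm z.
Proof. unfold Cnorm; simpl. f_equal; ring. Qed.

Lemma Cnorm_conj z : Cnorm (Cconj z) = Cnorm z.
Proof. unfold Cnorm; simpl. f_equal; ring. Qed.

Lemma Cnorm_sub z w : Cnorm (Csub z w) <= Cnorm z + Cnorm w.
Proof. rewrite <- (Cnorm_opp w). apply Cnorm_add. Qed.

Lemma Cnorm_sub_sym z w : Cnorm (Csub z w) = Cnorm (Csub w z).
Proof. unfold Cnorm; simpl. f_equal; ring. Qed.

Lemma Cnorm_RtoC x : Cnorm (RtoC x) = Rabs x.
Proof. unfold Cnorm; simpl. rewrite <- sqrt_Rsqr_abs. unfold Rsqr. f_equal; ring. Qed.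

Lemma Rabs_Re_le z : Rabs (Re z) <= Cnorm z.
Proof. rewrite <- sqrt_Rsqr_abs. apply sqrt_le_1_alt. unfold Rsqr. nra. Qed.

Lemma Rabs_Im_le z : Rabs (Im z) <= Cnorm z.
Proof. rewrite <- sqrt_Rsqr_abs. apply sqrt_le_1_alt. unfold Rsqr. nra. Qed.

Lemma Cnorm_le_Rabs_Re_Im z : Cnorm z <= Rabs (Re z) + Rabs (Im z).
Proof.
  pose proof (Rabs_pos (Re z)); pose proof (Rabs_pos (Im z)).
  apply Cnorm_le_sq; [lra |].
  rewrite <- (Rabs_right (Re z * Re z)), <- (Rabs_right (Im z * Im z)) by nra.
  rewrite !Rabs_mult. nra.
Qed.

Lemma Cnorm_C0 : Cnorm C0 = 0.
Proof. unfold C0. rewrite Cnorm_RtoC. apply Rabs_R0. Qed.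

Lemma Cnorm_C1 : Cnorm C1 = 1.
Proof. unfold C1. rewrite Cnorm_RtoC. apply Rabs_R1. Qed.

Lemma Cnorm_eq0 z : Cnorm z = 0 -> z = C0.
Proof.
  intro H. pose proof (Cnorm_sq z) as Hsq. rewrite H in Hsq.
  destruct z as [a b]; apply CC_ext; simpl in *; nra.
Qed.

Lemma Cnorm_inv z : Cnorm (Cinv z) = / Cnorm z.
Proof.
  destruct (Req_dec (Cnorm z) 0) as [H|H].
  - apply Cnorm_eq0 in H. subst. rewrite Cnorm_C0, Rinv_0.
    replace (Cinv C0) with C0 by (apply CC_ext; simpl; unfold Rdiv; ring).
    apply Cnorm_C0.
  - assert (Hz : z <> C0) by (intros ->; apply H, Cnorm_C0).
    assert (Cnorm (Cinv z) * Cnorm z = 1).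
    { rewrite <- Cnorm_mul, <- Cnorm_C1. f_equal. field. exact Hz. }
    apply Rmult_eq_reg_r with (Cnorm z); [rewrite Rinv_l |]; auto.
Qed.

Lemma Cnorm_div z w : Cnorm (Cdiv z w) = Cnorm z / Cnorm w.
Proof. unfold Cdiv. rewrite Cnorm_mul, Cnorm_inv. reflexivity. Qed.

Lemma Cnorm_pow z n : Cnorm (Cpow z n) = Cnorm z ^ n.
Proof. induction n; simpl; [apply Cnorm_C1 | rewrite Cnorm_mul, IHn; reflexivity]. Qed.

Lemma Cnorm_Cj : Cnorm Cj = 1.
Proof. unfold Cnorm; simpl. replace (0 * 0 + 1 * 1) with 1 by ring. apply sqrt_1. Qed.

Lemma Cnorm_Cexp z : Cnorm (Cexp z) = exp (Re z).
Proof.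
  apply Cnorm_eq_sq; [left; apply exp_pos |]. simpl.
  pose proof (sin2_cos2 (Im z)) as H. unfold Rsqr in H.
  transitivity (exp (Re z) * exp (Re z) * (sin (Im z) * sin (Im z) + cos (Im z) * cos (Im z)));
    [rewrite H |]; ring.
Qed.

Lemma Cnorm_Cexp_le z : Cnorm (Cexp z) <= exp (Cnorm z).
Proof.
  rewrite Cnorm_Cexp. apply exp_le_compat.
  pose proof (Rabs_Re_le z). pose proof (Rle_abs (Re z)). lra.
Qed.

Lemma Cnorm_Csqrt w : Cnorm (Csqrt w) = sqrt (Cnorm w).
Proof.
  pose proof (Rabs_Re_le w). pose proof (Cnorm_ge0 w).
  pose proof (Rle_abs (Re w)). pose proof (Rle_abs (- Re w)). rewrite Rabs_Ropp in *.
  unfold Csqrt. unfold Cnorm at 1. simpl. f_equal.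
  set (sg := if Rle_dec 0 (Im w) then 1 else -1).
  assert (Hsg : sg * sg = 1) by (unfold sg; destruct (Rle_dec 0 (Im w)); ring).
  transitivity (sqrt ((Cnorm w + Re w) / 2) * sqrt ((Cnorm w + Re w) / 2)
                + sg * sg * (sqrt ((Cnorm w - Re w) / 2) * sqrt ((Cnorm w - Re w) / 2)));
    [ring |].
  rewrite Hsg, !sqrt_sqrt by lra. field.
Qed.

Fixpoint Rsum (f : nat -> R) (n : nat) : R :=
  match n with O => 0 | S n' => Rsum f n' + f n' end.

Definition summable (A : nat -> R) : Prop := exists l, Un_cv (fun n => Rsum A n) l.

Lemma Rsum_nonneg A n : (forall k, 0 <= A k) -> 0 <= Rsum A n.
Proof. intro H; induction n; simpl; [lra | pose proof (H n); lra]. Qed.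

Lemma Rsum_le A B n : (forall k, A k <= B k) -> Rsum A n <= Rsum B n.
Proof. intro H; induction n; simpl; [lra | pose proof (H n); lra]. Qed.

Lemma Rsum_scal c A n : Rsum (fun k => c * A k) n = c * Rsum A n.
Proof. induction n; simpl; [ring | rewrite IHn; ring]. Qed.

Lemma Rsum_le_lim A l n :
  (forall k, 0 <= A k) -> Un_cv (fun n => Rsum A n) l -> Rsum A n <= l.
Proof.
  intros H Hl. apply (growing_ineq (fun n => Rsum A n)); auto.
  intro k. simpl. pose proof (H k); lra.
Qed.

Lemma summable_bounded A K :
  (forall k, 0 <= A k) -> (forall n, Rsum A n <= K) -> summable A.
Proof.
  intros H0 HK. destruct (growing_cv (fun n => Rsum A n)) as [l Hl].
  - intro n. simpl. pose proof (H0 n); lra.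
  - exists K. intros x [i ->]. apply HK.
  - exists l; exact Hl.
Qed.

Lemma summable_le A B : (forall k, 0 <= A k <= B k) -> summable B -> summable A.
Proof.
  intros H [l Hl]. apply (summable_bounded A l); [intro k; apply H |].
  intro n. eapply Rle_trans; [apply Rsum_le; intro k; apply H |].
  apply Rsum_le_lim; [intro k; pose proof (H k); lra | exact Hl].
Qed.

Lemma Un_cv_const a : Un_cv (fun _ => a) a.
Proof. intros eps He. exists 0%nat. intros. unfold R_dist. rewrite Rminus_diag, Rabs_R0. lra. Qed.

Lemma summable_scal c A : summable A -> summable (fun k => c * A k).
Proof.
  intros [l Hl]. exists (c * l).
  apply (Un_cv_ext (fun n => c * Rsum A n)); [intro n; symmetry; apply Rsum_scal |].
  apply CV_mult; [apply Un_cv_const | exact Hl].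
Qed.

Lemma summable_geometric_tail A N :
  (forall k, 0 <= A k) -> (forall k, (k >= N)%nat -> A k <= (/ 2) ^ k) -> summable A.
Proof.
  intros H0 H. apply (summable_bounded A (Rsum A N + 2)); auto.
  assert (Hg : forall n, 0 <= (/ 2) ^ n) by (intro; apply pow_le; lra).
  assert (Hgeom : forall n, Rsum (fun k => (/ 2) ^ k) n = 2 - 2 * (/ 2) ^ n)
    by (induction n; simpl; [field | rewrite IHn; field]).
  assert (Hsplit : forall n, Rsum A n <= Rsum A N + Rsum (fun k => (/ 2) ^ k) n).
  { induction n; simpl.
    - pose proof (Rsum_nonneg A N H0). lra.
    - destruct (Compare_dec.le_lt_dec N n) as [HNn | HnN].
      + pose proof (H n HNn). lra.
      + assert (Rsum A (S n) <= Rsum A N).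
        { apply Rge_le, (growing_prop (fun n => Rsum A n)); [intro k; simpl; pose proof (H0 k); lra | lia]. }
        simpl in *. pose proof (Rsum_nonneg (fun k => (/ 2) ^ k) n Hg). pose proof (Hg n). lra. }
  intro n. pose proof (Hsplit n). rewrite Hgeom in *. pose proof (Hg n). lra.
Qed.

Definition exp_term (x : R) (k : nat) : R := / INR (fact k) * x ^ k.

Lemma exp_term_nonneg x k : 0 <= x -> 0 <= exp_term x k.
Proof.
  intro. apply Rmult_le_pos; [left; apply Rinv_0_lt_compat, INR_fact_lt_0 | apply pow_le; auto].
Qed.

Lemma exp_series_cv x : Un_cv (fun n => Rsum (exp_term x) n) (exp x).
Proof.
  assert (Hsum : forall n, Rsum (exp_term x) (S n) = sum_f_R0 (exp_term x) n)
    by (induction n; simpl in *; [ring | rewrite <- IHn; reflexivity]).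
  pose proof (proj2_sig (exist_exp x)) as H. unfold exp_in, infinite_sum in H.
  intros eps He. destruct (H eps He) as [N HN]. exists (S N). intros [|n] Hn; [lia |].
  rewrite Hsum. apply HN. lia.
Qed.

Lemma summable_exp_term x : summable (exp_term x).
Proof. exists (exp x). apply exp_series_cv. Qed.

Lemma Rsum_exp_term_le x n : 0 <= x -> Rsum (exp_term x) n <= exp x.
Proof. intro. apply Rsum_le_lim; [intro; apply exp_term_nonneg; auto | apply exp_series_cv]. Qed.

Lemma pow_div_fact_le_exp x n : 0 <= x -> x ^ n / INR (fact n) <= exp x.
Proof.
  intro Hx. eapply Rle_trans; [| apply (Rsum_exp_term_le x (S n) Hx)].
  simpl. pose proof (Rsum_nonneg (exp_term x) n (fun k => exp_term_nonneg x k Hx)).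
  unfold exp_term at 2, Rdiv. rewrite Rmult_comm. lra.
Qed.

Definition Clim (u : nat -> CC) : CC := epsilon (inhabits C0) (fun l => C_cv u l).

Lemma Clim_spec u : (exists l, C_cv u l) -> C_cv u (Clim u).
Proof. apply epsilon_spec. Qed.

Lemma C_cv_le u l x B N :
  C_cv u l -> (forall n, (n >= N)%nat -> Cnorm (Csub (u n) x) <= B) ->
  Cnorm (Csub l x) <= B.
Proof.
  intros Hl Hb. apply Rnot_lt_le. intro Hc.
  destruct (Hl (Cnorm (Csub l x) - B)) as [N1 HN1]; [lra |].
  specialize (HN1 (max N N1) ltac:(lia)). specialize (Hb (max N N1) ltac:(lia)).
  pose proof (Cnorm_add (Csub l (u (max N N1))) (Csub (u (max N N1)) x)).
  replace (Cadd (Csub l (u (max N N1))) (Csub (u (max N N1)) x)) with (Csub l x) in * by ring.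
  rewrite Cnorm_sub_sym in HN1. lra.
Qed.

Lemma C_cv_unique u l1 l2 : C_cv u l1 -> C_cv u l2 -> l1 = l2.
Proof.
  intros H1 H2.
  assert (Hle : forall e, e > 0 -> Cnorm (Csub l1 l2) <= e).
  { intros e He. destruct (H2 e He) as [N HN].
    apply (C_cv_le u l1 l2 e N H1). intros n Hn. left. apply HN, Hn. }
  assert (Cnorm (Csub l1 l2) = 0).
  { pose proof (Cnorm_ge0 (Csub l1 l2)). destruct H as [Hp|]; auto.
    specialize (Hle (Cnorm (Csub l1 l2) / 2) ltac:(lra)). lra. }
  apply Cnorm_eq0 in H.
  transitivity (Cadd (Csub l1 l2) l2); [ring | rewrite H; ring].
Qed.

Lemma Clim_eq u l : C_cv u l -> Clim u = l.
Proof. intro H. apply (C_cv_unique u); [apply Clim_spec; eauto | exact H]. Qed.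

Lemma C_cv_cauchy u :
  (forall eps, eps > 0 -> exists N, forall n m, (n >= N)%nat -> (m >= N)%nat ->
     Cnorm (Csub (u n) (u m)) < eps) ->
  exists l, C_cv u l.
Proof.
  intro H.
  assert (HR : Cauchy_crit (fun n => Re (u n))).
  { intros eps He. destruct (H eps He) as [N HN]. exists N. intros n m Hn Hm.
    eapply Rle_lt_trans; [apply (Rabs_Re_le (Csub (u n) (u m))) | apply HN; auto]. }
  assert (HI : Cauchy_crit (fun n => Im (u n))).
  { intros eps He. destruct (H eps He) as [N HN]. exists N. intros n m Hn Hm.
    eapply Rle_lt_trans; [apply (Rabs_Im_le (Csub (u n) (u m))) | apply HN; auto]. }
  destruct (R_complete _ HR) as [a Ha], (R_complete _ HI) as [b Hb].
  exists (mkC a b). intros eps He.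
  destruct (Ha (eps / 2)) as [N1 HN1]; [lra |]. destruct (Hb (eps / 2)) as [N2 HN2]; [lra |].
  exists (max N1 N2). intros n Hn.
  specialize (HN1 n ltac:(lia)). specialize (HN2 n ltac:(lia)). unfold R_dist in *.
  eapply Rle_lt_trans; [apply Cnorm_le_Rabs_Re_Im |]. simpl. unfold Rminus in *. lra.
Qed.

Lemma C_cv_sub u v a b :
  C_cv u a -> C_cv v b -> C_cv (fun n => Csub (u n) (v n)) (Csub a b).
Proof.
  intros Hu Hv eps He.
  destruct (Hu (eps / 2) ltac:(lra)) as [N1 H1], (Hv (eps / 2) ltac:(lra)) as [N2 H2].
  exists (max N1 N2). intros n Hn. specialize (H1 n ltac:(lia)). specialize (H2 n ltac:(lia)).
  replace (Csub (Csub (u n) (v n)) (Csub a b)) with (Csub (Csub (u n) a) (Csub (v n) b)) by ring.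
  eapply Rle_lt_trans; [apply Cnorm_sub | lra].
Qed.

Lemma C_cv_conj u l : C_cv u l -> C_cv (fun n => Cconj (u n)) (Cconj l).
Proof.
  intros H eps He. destruct (H eps He) as [N HN]. exists N. intros n Hn.
  rewrite <- Cconj_sub, Cnorm_conj. auto.
Qed.

Lemma C_cv_Re u l : C_cv u l -> Un_cv (fun n => Re (u n)) (Re l).
Proof.
  intros H eps He. destruct (H eps He) as [N HN]. exists N. intros n Hn.
  eapply Rle_lt_trans; [apply (Rabs_Re_le (Csub (u n) l)) | apply HN, Hn].
Qed.

Lemma unif_cv_disc_pointwise F f M w :
  unif_cv_disc F f M -> Cnorm w <= M -> C_cv (fun n => F n w) (f w).
Proof. intros H Hw eps He. destruct (H eps He) as [N HN]. exists N. intros n Hn. apply HN; auto. Qed.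

Definition Cpsum (f : nat -> CC -> CC) (n : nat) (z : CC) : CC := Csum (fun k => f k z) n.
Definition Cseries (f : nat -> CC -> CC) (z : CC) : CC := Clim (fun n => Cpsum f n z).

Definition normal_on_discs (f : nat -> CC -> CC) : Prop :=
  forall M, exists A, (forall k, 0 <= A k) /\ summable A /\
    forall k z, Cnorm z <= M -> Cnorm (f k z) <= A k.

Lemma Cnorm_Csum_le f n : Cnorm (Csum f n) <= Rsum (fun k => Cnorm (f k)) n.
Proof.
  induction n; simpl; [rewrite Cnorm_C0; lra |].
  eapply Rle_trans; [apply Cnorm_add | lra].
Qed.

Section Mtest.
Variables (f : nat -> CC -> CC) (A : nat -> R) (lA : R) (z : CC).
Hypotheses (HA0 : forall k, 0 <= A k) (HlA : Un_cv (fun n => Rsum A n) lA)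
  (Hf : forall k, Cnorm (f k z) <= A k).

Lemma Cpsum_tail_le n m :
  (n <= m)%nat -> Cnorm (Csub (Cpsum f m z) (Cpsum f n z)) <= lA - Rsum A n.
Proof.
  intro Hnm. pose proof (Rsum_le_lim A lA m HA0 HlA).
  enough (Cnorm (Csub (Cpsum f m z) (Cpsum f n z)) <= Rsum A m - Rsum A n) by lra.
  clear H. induction Hnm.
  - replace (Csub (Cpsum f n z) (Cpsum f n z)) with C0 by ring. rewrite Cnorm_C0. lra.
  - unfold Cpsum in *; simpl.
    replace (Csub (Cadd (Csum (fun k => f k z) m) (f m z)) (Csum (fun k => f k z) n))
      with (Cadd (Csub (Csum (fun k => f k z) m) (Csum (fun k => f k z) n)) (f m z)) by ring.
    eapply Rle_trans; [apply Cnorm_add |]. pose proof (Hf m). lra.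
Qed.

Lemma Mtest_cv : C_cv (fun n => Cpsum f n z) (Cseries f z).
Proof.
  apply Clim_spec, C_cv_cauchy. intros eps He.
  destruct (HlA eps He) as [N HN]. exists N.
  assert (Htail : forall p q, (p >= N)%nat -> (p <= q)%nat ->
            Cnorm (Csub (Cpsum f q z) (Cpsum f p z)) < eps).
  { intros p q Hp Hpq. eapply Rle_lt_trans; [apply Cpsum_tail_le, Hpq |].
    specialize (HN p Hp). unfold R_dist in HN. rewrite Rabs_minus_sym in HN.
    pose proof (Rle_abs (lA - Rsum A p)). lra. }
  intros n m Hn Hm. destruct (Nat.le_ge_cases n m).
  - rewrite Cnorm_sub_sym. apply Htail; auto.
  - apply Htail; auto.
Qed.

Lemma Mtest_tail_le n : Cnorm (Csub (Cpsum f n z) (Cseries f z)) <= lA - Rsum A n.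
Proof.
  rewrite Cnorm_sub_sym. apply (C_cv_le _ _ _ _ n Mtest_cv). apply Cpsum_tail_le.
Qed.

End Mtest.

Lemma Cseries_unif_cv f : normal_on_discs f -> forall M, unif_cv_disc (Cpsum f) (Cseries f) M.
Proof.
  intros Hb M eps He. destruct (Hb M) as [A [HA0 [[lA HlA] Hf]]].
  destruct (HlA eps He) as [N HN]. exists N. intros n z Hn Hz.
  eapply Rle_lt_trans; [apply (Mtest_tail_le f A lA z HA0 HlA (fun k => Hf k z Hz)) |].
  specialize (HN n Hn). unfold R_dist in HN. rewrite Rabs_minus_sym in HN.
  pose proof (Rle_abs (lA - Rsum A n)). lra.
Qed.

Lemma Cseries_cv f : normal_on_discs f -> forall z, C_cv (fun n => Cpsum f n z) (Cseries f z).
Proof.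
  intros Hb z. apply (unif_cv_disc_pointwise _ _ (Cnorm z)); [apply Cseries_unif_cv, Hb | lra].
Qed.

Lemma Cnorm_Cseries_le f z B :
  normal_on_discs f -> (forall n, Rsum (fun k => Cnorm (f k z)) n <= B) ->
  Cnorm (Cseries f z) <= B.
Proof.
  intros Hb HB. replace (Cseries f z) with (Csub (Cseries f z) C0) by ring.
  apply (C_cv_le (fun n => Cpsum f n z) _ _ _ 0 (Cseries_cv f Hb z)). intros n _.
  replace (Csub (Cpsum f n z) C0) with (Cpsum f n z) by ring.
  eapply Rle_trans; [apply Cnorm_Csum_le | apply HB].
Qed.

(** * Complex differentiability *)

Definition is_Cderive (f : CC -> CC) (z l : CC) : Prop :=
  forall eps, eps > 0 -> exists delta, delta > 0 /\ forall h, Cnorm h < delta ->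
    Cnorm (Csub (Csub (f (Cadd z h)) (f z)) (Cmul l h)) <= eps * Cnorm h.

Lemma is_Cderive_ext f g z l : (forall w, f w = g w) -> is_Cderive f z l -> is_Cderive g z l.
Proof.
  intros E H eps He. destruct (H eps He) as [d [Hd Hh]]. exists d; split; auto.
  intros h Hh'. rewrite <- !E. auto.
Qed.

Lemma is_Cderive_eq f z l l' : l = l' -> is_Cderive f z l -> is_Cderive f z l'.
Proof. intros ->; auto. Qed.

Lemma is_Cderive_lipschitz f z l : is_Cderive f z l ->
  exists delta, delta > 0 /\ forall h, Cnorm h < delta ->
    Cnorm (Csub (f (Cadd z h)) (f z)) <= (Cnorm l + 1) * Cnorm h.
Proof.
  intro H. destruct (H 1 ltac:(lra)) as [d [Hd Hh]]. exists d; split; auto.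
  intros h Hh'. specialize (Hh h Hh').
  replace (Csub (f (Cadd z h)) (f z))
    with (Cadd (Csub (Csub (f (Cadd z h)) (f z)) (Cmul l h)) (Cmul l h)) by ring.
  eapply Rle_trans; [apply Cnorm_add | rewrite Cnorm_mul; lra].
Qed.

Lemma is_Cderive_const c z : is_Cderive (fun _ => c) z C0.
Proof.
  intros eps He. exists 1; split; [lra |]. intros h _.
  replace (Csub (Csub c c) (Cmul C0 h)) with C0 by ring.
  rewrite Cnorm_C0. pose proof (Cnorm_ge0 h). nra.
Qed.

Lemma is_Cderive_id z : is_Cderive (fun w => w) z C1.
Proof.
  intros eps He. exists 1; split; [lra |]. intros h _.
  replace (Csub (Csub (Cadd z h) z) (Cmul C1 h)) with C0 by ring.
  rewrite Cnorm_C0. pose proof (Cnorm_ge0 h). nra.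
Qed.

Lemma is_Cderive_sqr z : is_Cderive (fun w => Cmul w w) z (Cmul (RtoC 2) z).
Proof.
  intros eps He. exists eps; split; auto. intros h Hh.
  replace (Csub (Csub (Cmul (Cadd z h) (Cadd z h)) (Cmul z z)) (Cmul (Cmul (RtoC 2) z) h))
    with (Cmul h h) by (apply CC_ext; simpl; ring).
  rewrite Cnorm_mul. pose proof (Cnorm_ge0 h). nra.
Qed.

Lemma is_Cderive_plus f g z l1 l2 : is_Cderive f z l1 -> is_Cderive g z l2 ->
  is_Cderive (fun w => Cadd (f w) (g w)) z (Cadd l1 l2).
Proof.
  intros H1 H2 eps He.
  destruct (H1 (eps / 2) ltac:(lra)) as [d1 [Hd1 Hh1]].
  destruct (H2 (eps / 2) ltac:(lra)) as [d2 [Hd2 Hh2]].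
  exists (Rmin d1 d2); split; [apply Rmin_pos; auto |]. intros h Hh.
  specialize (Hh1 h ltac:(pose proof (Rmin_l d1 d2); lra)).
  specialize (Hh2 h ltac:(pose proof (Rmin_r d1 d2); lra)).
  replace (Csub (Csub (Cadd (f (Cadd z h)) (g (Cadd z h))) (Cadd (f z) (g z)))
                (Cmul (Cadd l1 l2) h))
    with (Cadd (Csub (Csub (f (Cadd z h)) (f z)) (Cmul l1 h))
               (Csub (Csub (g (Cadd z h)) (g z)) (Cmul l2 h))) by ring.
  eapply Rle_trans; [apply Cnorm_add | lra].
Qed.

Lemma is_Cderive_scal c f z l : is_Cderive f z l ->
  is_Cderive (fun w => Cmul c (f w)) z (Cmul c l).
Proof.
  intros H eps He. pose proof (Cnorm_ge0 c).
  destruct (H (eps / (Cnorm c + 1))) as [d [Hd Hh]]; [apply Rdiv_lt_0_compat; lra |].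
  exists d; split; auto. intros h Hh'. specialize (Hh h Hh').
  replace (Csub (Csub (Cmul c (f (Cadd z h))) (Cmul c (f z))) (Cmul (Cmul c l) h))
    with (Cmul c (Csub (Csub (f (Cadd z h)) (f z)) (Cmul l h))) by ring.
  rewrite Cnorm_mul. pose proof (Cnorm_ge0 h).
  eapply Rle_trans; [apply Rmult_le_compat_l; [lra | apply Hh] |].
  apply Rmult_le_reg_r with (Cnorm c + 1); [lra |].
  field_simplify; [| lra]. nra.
Qed.

Lemma is_Cderive_scal_r f c z l : is_Cderive f z l ->
  is_Cderive (fun w => Cmul (f w) c) z (Cmul l c).
Proof.
  intro H. apply is_Cderive_ext with (fun w => Cmul c (f w)); [intro; ring |].
  apply (is_Cderive_eq _ _ (Cmul c l)); [ring | apply is_Cderive_scal, H].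
Qed.

Lemma is_Cderive_opp f z l : is_Cderive f z l -> is_Cderive (fun w => Copp (f w)) z (Copp l).
Proof.
  intro H. apply is_Cderive_ext with (fun w => Cmul (RtoC (-1)) (f w));
    [intro; apply CC_ext; simpl; ring |].
  apply (is_Cderive_eq _ _ (Cmul (RtoC (-1)) l)); [apply CC_ext; simpl; ring |].
  apply is_Cderive_scal, H.
Qed.

Lemma is_Cderive_minus f g z l1 l2 : is_Cderive f z l1 -> is_Cderive g z l2 ->
  is_Cderive (fun w => Csub (f w) (g w)) z (Csub l1 l2).
Proof. intros. apply is_Cderive_plus; [| apply is_Cderive_opp]; auto. Qed.

Lemma is_Cderive_comp f g z l1 l2 : is_Cderive g z l1 -> is_Cderive f (g z) l2 ->
  is_Cderive (fun w => f (g w)) z (Cmul l2 l1).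
Proof.
  intros H1 H2 eps He.
  destruct (is_Cderive_lipschitz g z l1 H1) as [d0 [Hd0 Hc]].
  set (K1 := Cnorm l1 + 1). set (K2 := Cnorm l2 + 1).
  assert (HK1 : 0 < K1) by (unfold K1; pose proof (Cnorm_ge0 l1); lra).
  assert (HK2 : 0 < K2) by (unfold K2; pose proof (Cnorm_ge0 l2); lra).
  destruct (H2 (eps / (2 * K1))) as [d2 [Hd2 Hh2]]; [apply Rdiv_lt_0_compat; lra |].
  destruct (H1 (eps / (2 * K2))) as [d1 [Hd1 Hh1]]; [apply Rdiv_lt_0_compat; lra |].
  exists (Rmin d0 (Rmin d1 (d2 / K1))).
  split; [repeat apply Rmin_pos; auto; apply Rdiv_lt_0_compat; lra |].
  intros h Hh.
  pose proof (Rmin_l d0 (Rmin d1 (d2 / K1))). pose proof (Rmin_r d0 (Rmin d1 (d2 / K1))).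
  pose proof (Rmin_l d1 (d2 / K1)). pose proof (Rmin_r d1 (d2 / K1)).
  specialize (Hc h ltac:(lra)). specialize (Hh1 h ltac:(lra)).
  set (k := Csub (g (Cadd z h)) (g z)) in *.
  pose proof (Cnorm_ge0 h). pose proof (Cnorm_ge0 k).
  assert (Hk : Cnorm k <= K1 * Cnorm h) by exact Hc.
  assert (Hkd : Cnorm k < d2).
  { apply Rle_lt_trans with (K1 * Cnorm h); auto.
    apply Rmult_lt_reg_r with (/ K1); [apply Rinv_0_lt_compat; lra |].
    replace (K1 * Cnorm h * / K1) with (Cnorm h) by (field; lra). unfold Rdiv in *. lra. }
  specialize (Hh2 k Hkd).
  replace (f (g (Cadd z h))) with (f (Cadd (g z) k)) by (f_equal; unfold k; ring).
  (* the chain-rule remainder splits into the remainder of [f] and [l2] times that of [g] *)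
  replace (Csub (Csub (f (Cadd (g z) k)) (f (g z))) (Cmul (Cmul l2 l1) h))
    with (Cadd (Csub (Csub (f (Cadd (g z) k)) (f (g z))) (Cmul l2 k))
               (Cmul l2 (Csub (Csub (g (Cadd z h)) (g z)) (Cmul l1 h)))) by (unfold k; ring).
  eapply Rle_trans; [apply Cnorm_add |]. rewrite Cnorm_mul.
  assert (eps / (2 * K1) * Cnorm k <= eps / 2 * Cnorm h).
  { apply Rle_trans with (eps / (2 * K1) * (K1 * Cnorm h));
      [apply Rmult_le_compat_l; [apply Rlt_le, Rdiv_lt_0_compat |]; lra |].
    right. field. lra. }
  assert (Cnorm l2 * Cnorm (Csub (Csub (g (Cadd z h)) (g z)) (Cmul l1 h)) <= eps / 2 * Cnorm h).
  { apply Rle_trans with (K2 * (eps / (2 * K2) * Cnorm h)).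
    - apply Rmult_le_compat; [apply Cnorm_ge0 | apply Cnorm_ge0 | unfold K2; lra | exact Hh1].
    - right. field. lra. }
  lra.
Qed.

(* The product rule follows from the square rule by polarisation. *)
Lemma is_Cderive_mult f g z l1 l2 : is_Cderive f z l1 -> is_Cderive g z l2 ->
  is_Cderive (fun w => Cmul (f w) (g w)) z (Cadd (Cmul l1 (g z)) (Cmul (f z) l2)).
Proof.
  intros H1 H2.
  set (sq := fun w : CC => Cmul w w).
  apply is_Cderive_ext with (fun w => Cmul (RtoC (/ 4))
     (Csub (sq (Cadd (f w) (g w))) (sq (Csub (f w) (g w))))).
  { intro w. unfold sq. apply CC_ext; simpl; field. }
  eapply is_Cderive_eq; [| apply is_Cderive_scal, is_Cderive_minus;
    apply is_Cderive_comp with (f := sq); [apply is_Cderive_plus | apply is_Cderive_sqr |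
                                           apply is_Cderive_minus | apply is_Cderive_sqr]; eauto].
  apply CC_ext; simpl; field.
Qed.

Lemma is_Cderive_Csum (f f' : nat -> CC -> CC) z n :
  (forall k, is_Cderive (f k) z (f' k z)) ->
  is_Cderive (fun w => Csum (fun k => f k w) n) z (Csum (fun k => f' k z) n).
Proof.
  intro H. induction n; simpl; [apply is_Cderive_const | apply is_Cderive_plus; auto].
Qed.

Lemma is_Cderive_pow n z :
  is_Cderive (fun w => Cpow w n) z (Cmul (RtoC (INR n)) (Cpow z (pred n))).
Proof.
  induction n as [|n IH]; simpl Cpow.
  - eapply is_Cderive_eq; [| apply is_Cderive_const]. apply CC_ext; simpl; ring.
  - eapply is_Cderive_eq; [| apply is_Cderive_mult; [apply is_Cderive_id | apply IH]].
    rewrite S_INR, RtoC_add. destruct n as [|n].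
    + apply CC_ext; simpl; ring.
    + change (Cpow z (S n)) with (Cmul z (Cpow z n)). simpl pred. change (RtoC 1) with C1. ring.
Qed.

Lemma derivable_pt_lim_0_remainder f l : derivable_pt_lim f 0 l ->
  forall e, e > 0 -> exists d, d > 0 /\
    forall x, Rabs x < d -> Rabs (f x - f 0 - l * x) <= e * Rabs x.
Proof.
  intros H e He. destruct (H e He) as [d Hd]. exists d; split; [apply (cond_pos d) |].
  intros x Hx. destruct (Req_dec x 0) as [->|Hx0].
  - rewrite Rabs_R0. replace (f 0 - f 0 - l * 0) with 0 by ring. rewrite Rabs_R0; lra.
  - specialize (Hd x Hx0 Hx). rewrite Rplus_0_l in Hd.
    replace (f x - f 0 - l * x) with (((f x - f 0) / x - l) * x) by (field; auto).
    rewrite Rabs_mult. apply Rmult_le_compat_r; [apply Rabs_pos | lra].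
Qed.

Lemma exp_cos_remainder x y e : 0 <= e <= 1 -> Rabs x <= 1 ->
  Rabs (exp x - 1 - x) <= e * Rabs x -> Rabs (cos y - 1) <= e * Rabs y ->
  Rabs (exp x * cos y - 1 - x) <= 3 * e * (Rabs x + Rabs y).
Proof.
  intros He Hx H1 H2.
  replace (exp x * cos y - 1 - x) with ((exp x - 1 - x) * cos y + (1 + x) * (cos y - 1)) by ring.
  eapply Rle_trans; [apply Rabs_triang | rewrite !Rabs_mult].
  assert (Hc : Rabs (cos y) <= 1) by (pose proof (COS_bound y); apply Rabs_le; lra).
  assert (H1x : Rabs (1 + x) <= 2) by (pose proof (Rabs_triang 1 x); rewrite Rabs_R1 in *; lra).
  pose proof (Rabs_pos (cos y)). pose proof (Rabs_pos (1 + x)).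
  pose proof (Rabs_pos x). pose proof (Rabs_pos y).
  pose proof (Rabs_pos (exp x - 1 - x)). pose proof (Rabs_pos (cos y - 1)).
  assert (Rabs (exp x - 1 - x) * Rabs (cos y) <= e * Rabs x)
    by (apply Rle_trans with (e * Rabs x * 1); [apply Rmult_le_compat |]; lra).
  assert (Rabs (1 + x) * Rabs (cos y - 1) <= 2 * (e * Rabs y)) by (apply Rmult_le_compat; lra).
  assert (0 <= e * Rabs x) by nra. assert (0 <= e * Rabs y) by nra. lra.
Qed.

Lemma exp_sin_remainder x y e : 0 <= e <= 1 -> Rabs y <= e ->
  Rabs (exp x - 1 - x) <= e * Rabs x -> Rabs (sin y - y) <= e * Rabs y ->
  Rabs (exp x * sin y - y) <= 6 * e * (Rabs x + Rabs y).
Proof.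
  intros He Hy H1 H2.
  replace (exp x * sin y - y) with ((exp x - 1 - x) * sin y + x * sin y + (sin y - y)) by ring.
  pose proof (Rabs_pos (sin y)). pose proof (Rabs_pos x). pose proof (Rabs_pos y).
  assert (Hs : Rabs (sin y) <= 2 * Rabs y).
  { replace (sin y) with ((sin y - y) + y) by ring. pose proof (Rabs_triang (sin y - y) y). nra. }
  assert (Rabs (exp x - 1 - x) * Rabs (sin y) <= e * Rabs x * (2 * e))
    by (apply Rmult_le_compat; [apply Rabs_pos | | |]; lra).
  assert (Rabs x * Rabs (sin y) <= Rabs x * (2 * e)) by (apply Rmult_le_compat_l; lra).
  eapply Rle_trans; [apply Rabs_triang |].
  eapply Rle_trans; [apply Rplus_le_compat_r, Rabs_triang |].
  rewrite !Rabs_mult.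
  assert (0 <= e * Rabs x) by (apply Rmult_le_pos; lra).
  assert (0 <= e * Rabs y) by (apply Rmult_le_pos; lra).
  assert (e * Rabs x * (2 * e) <= 2 * e * Rabs x) by nra.
  lra.
Qed.

Lemma Cexp_remainder eps : eps > 0 -> exists d, d > 0 /\ forall h, Cnorm h < d ->
  Cnorm (Csub (Csub (Cexp h) C1) h) <= eps * Cnorm h.
Proof.
  intro He. set (e := Rmin (eps / 18) 1).
  assert (He0 : 0 < e) by (apply Rmin_pos; lra).
  assert (He1 : e <= 1) by apply Rmin_r. assert (Hee : e <= eps / 18) by apply Rmin_l.
  destruct (derivable_pt_lim_0_remainder exp 1 derivable_pt_lim_exp_0 e He0) as [d1 [Hd1 H1]].
  destruct (derivable_pt_lim_0_remainder sin 1
              ltac:(rewrite <- cos_0; apply derivable_pt_lim_sin) e He0) as [d2 [Hd2 H2]].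
  destruct (derivable_pt_lim_0_remainder cos 0
              ltac:(replace 0 with (- sin 0) at 2 by (rewrite sin_0; ring);
                    apply derivable_pt_lim_cos) e He0) as [d3 [Hd3 H3]].
  exists (Rmin (Rmin d1 d2) (Rmin d3 e)). split; [repeat apply Rmin_pos; lra |].
  intros [x y] Hh.
  pose proof (Rmin_l (Rmin d1 d2) (Rmin d3 e)). pose proof (Rmin_r (Rmin d1 d2) (Rmin d3 e)).
  pose proof (Rmin_l d1 d2). pose proof (Rmin_r d1 d2).
  pose proof (Rmin_l d3 e). pose proof (Rmin_r d3 e).
  pose proof (Rabs_Re_le (mkC x y)) as Hx. pose proof (Rabs_Im_le (mkC x y)) as Hy.
  simpl in Hx, Hy. set (nh := Cnorm (mkC x y)) in *.
  specialize (H1 x ltac:(lra)). specialize (H2 y ltac:(lra)). specialize (H3 y ltac:(lra)).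
  rewrite exp_0, Rmult_1_l in H1. rewrite sin_0, Rmult_1_l, Rminus_0_r in H2.
  rewrite cos_0, Rmult_0_l, Rminus_0_r in H3.
  pose proof (exp_cos_remainder x y e ltac:(lra) ltac:(lra) H1 H3).
  pose proof (exp_sin_remainder x y e ltac:(lra) ltac:(lra) H1 H2).
  eapply Rle_trans; [apply Cnorm_le_Rabs_Re_Im |]. simpl.
  unfold Rminus in *. rewrite Ropp_0, Rplus_0_r.
  assert (e * (Rabs x + Rabs y) <= e * (2 * nh)) by (apply Rmult_le_compat_l; lra).
  assert (e * nh <= eps / 18 * nh) by (apply Rmult_le_compat_r; [apply Cnorm_ge0 | lra]).
  lra.
Qed.

Lemma is_Cderive_exp z : is_Cderive Cexp z (Cexp z).
Proof.
  intros eps He. pose proof (Cnorm_ge0 (Cexp z)).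
  destruct (Cexp_remainder (eps / (Cnorm (Cexp z) + 1))) as [d [Hd Hh]];
    [apply Rdiv_lt_0_compat; lra |].
  exists d; split; auto. intros h Hh'. specialize (Hh h Hh').
  replace (Csub (Csub (Cexp (Cadd z h)) (Cexp z)) (Cmul (Cexp z) h))
    with (Cmul (Cexp z) (Csub (Csub (Cexp h) C1) h)) by (rewrite Cexp_add; ring).
  rewrite Cnorm_mul. pose proof (Cnorm_ge0 h).
  eapply Rle_trans; [apply Rmult_le_compat_l; [lra | apply Hh] |].
  apply Rmult_le_reg_r with (Cnorm (Cexp z) + 1); [lra |].
  field_simplify; [| lra]. nra.
Qed.

(** * Mean value inequality and uniform limits *)

Lemma derivable_pt_lim_Re_segment G D u z h t :
  (forall w, is_Cderive G w (D w)) ->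
  derivable_pt_lim (fun t => Re (Cmul u (G (Cadd z (Cmul (RtoC t) h)))))
    t (Re (Cmul u (Cmul (D (Cadd z (Cmul (RtoC t) h))) h))).
Proof.
  intros HG eps He.
  set (w := Cadd z (Cmul (RtoC t) h)).
  pose proof (Cnorm_ge0 u). pose proof (Cnorm_ge0 h).
  set (K := Cnorm u * Cnorm h + 1).
  assert (HK : 0 < K) by (unfold K; nra).
  destruct (HG w (eps / (2 * K))) as [d [Hd Hh]]; [apply Rdiv_lt_0_compat; lra |].
  assert (Hdp : 0 < d / (Cnorm h + 1)) by (apply Rdiv_lt_0_compat; lra).
  exists (mkposreal _ Hdp). intros s Hs0 Hs. simpl in Hs. cbv beta.
  set (k := Cmul (RtoC s) h).
  assert (Hk : Cnorm k = Rabs s * Cnorm h) by (unfold k; rewrite Cnorm_mul, Cnorm_RtoC; auto).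
  assert (Hkd : Cnorm k < d).
  { rewrite Hk. pose proof (Rabs_pos s).
    apply Rmult_lt_compat_r with (r := Cnorm h + 1) in Hs; [| lra].
    replace (d / (Cnorm h + 1) * (Cnorm h + 1)) with d in Hs by (field; lra). nra. }
  set (E := Csub (Csub (G (Cadd w k)) (G w)) (Cmul (D w) k)).
  assert (HE : Cnorm E <= eps / (2 * K) * (Rabs s * Cnorm h)) by (rewrite <- Hk; apply Hh, Hkd).
  replace (Cadd z (Cmul (RtoC (t + s)) h)) with (Cadd w k) by (unfold w, k; rewrite RtoC_add; ring).
  fold w.
  replace ((Re (Cmul u (G (Cadd w k))) - Re (Cmul u (G w))) / s - Re (Cmul u (Cmul (D w) h)))
    with (Re (Cmul u E) / s) by (unfold E, k; simpl; field; exact Hs0).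
  assert (Hs1 : 0 < Rabs s) by (apply Rabs_pos_lt, Hs0).
  unfold Rdiv. rewrite Rabs_mult, Rabs_inv.
  apply Rmult_lt_reg_r with (Rabs s); [exact Hs1 |].
  rewrite Rmult_assoc, Rinv_l, Rmult_1_r by lra.
  eapply Rle_lt_trans; [apply Rabs_Re_le |]. rewrite Cnorm_mul.
  eapply Rle_lt_trans; [apply Rmult_le_compat_l; [lra | exact HE] |].
  replace (Cnorm u * (eps / (2 * K) * (Rabs s * Cnorm h)))
    with (eps * Rabs s * (Cnorm u * Cnorm h / (2 * K))) by (field; lra).
  rewrite <- (Rmult_1_r (eps * Rabs s)) at 2.
  apply Rmult_lt_compat_l; [nra |].
  apply Rmult_lt_reg_r with (2 * K); [lra |]. unfold Rdiv. rewrite Rmult_assoc, Rinv_l by lra. unfold K. nra.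
Qed.

(* Apply the real mean value theorem to t |-> Re(conj(G(z+h) - G z) * G(z + t h)). *)
Lemma Cnorm_increment_le G D z h B :
  (forall w, is_Cderive G w (D w)) ->
  (forall t, 0 <= t <= 1 -> Cnorm (D (Cadd z (Cmul (RtoC t) h))) <= B) ->
  Cnorm (Csub (G (Cadd z h)) (G z)) <= B * Cnorm h.
Proof.
  intros HG HB.
  set (v := Csub (G (Cadd z h)) (G z)).
  set (phi := fun t => Re (Cmul (Cconj v) (G (Cadd z (Cmul (RtoC t) h))))).
  set (phi' := fun t => Re (Cmul (Cconj v) (Cmul (D (Cadd z (Cmul (RtoC t) h))) h))).
  destruct (MVT_cor2 phi phi' 0 1 ltac:(lra)
              (fun c _ => derivable_pt_lim_Re_segment G D (Cconj v) z h c HG)) as [c [Hc Hc01]].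
  assert (H1 : phi 1 - phi 0 = Cnorm v * Cnorm v).
  { unfold phi.
    replace (Cadd z (Cmul (RtoC 1) h)) with (Cadd z h) by (change (RtoC 1) with C1; ring).
    replace (Cadd z (Cmul (RtoC 0) h)) with z by (change (RtoC 0) with C0; ring).
    rewrite Cnorm_sq. unfold v. simpl. ring. }
  assert (H2 : phi' c <= Cnorm v * (B * Cnorm h)).
  { unfold phi'. eapply Rle_trans; [apply Rle_abs |]. eapply Rle_trans; [apply Rabs_Re_le |].
    rewrite !Cnorm_mul, Cnorm_conj.
    pose proof (Cnorm_ge0 v). pose proof (Cnorm_ge0 h).
    apply Rmult_le_compat_l; [lra |].
    apply Rmult_le_compat_r; [lra | apply HB; lra]. }
  assert (HB0 : 0 <= B) by (eapply Rle_trans; [apply Cnorm_ge0 | apply (HB 0); lra]).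
  pose proof (Cnorm_ge0 v). pose proof (Cnorm_ge0 h).
  fold v. rewrite Rminus_0_r, Rmult_1_r in Hc. rewrite Hc in H1.
  assert (0 <= B * Cnorm h) by nra.
  destruct (Rle_lt_dec (Cnorm v) (B * Cnorm h)); [auto | nra].
Qed.

Lemma Cnorm_increment_diff_le F1 F2 D1 D2 z h e :
  (forall w, is_Cderive F1 w (D1 w)) -> (forall w, is_Cderive F2 w (D2 w)) ->
  (forall t, 0 <= t <= 1 ->
     Cnorm (Csub (D1 (Cadd z (Cmul (RtoC t) h))) (D2 (Cadd z (Cmul (RtoC t) h)))) <= e) ->
  Cnorm (Csub (Csub (F1 (Cadd z h)) (F1 z)) (Csub (F2 (Cadd z h)) (F2 z))) <= e * Cnorm h.
Proof.
  intros H1 H2 He.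
  replace (Csub (Csub (F1 (Cadd z h)) (F1 z)) (Csub (F2 (Cadd z h)) (F2 z)))
    with (Csub (Csub (F1 (Cadd z h)) (F2 (Cadd z h))) (Csub (F1 z) (F2 z))) by ring.
  apply (Cnorm_increment_le (fun w => Csub (F1 w) (F2 w)) (fun w => Csub (D1 w) (D2 w))); auto.
  intro w. apply is_Cderive_minus; auto.
Qed.

Lemma is_Cderive_unif_limit (F D : nat -> CC -> CC) f g :
  (forall N w, is_Cderive (F N) w (D N w)) ->
  (forall M, unif_cv_disc F f M) -> (forall M, unif_cv_disc D g M) ->
  forall z, is_Cderive f z (g z).
Proof.
  intros HF Hf Hg z eps He.
  set (M := Cnorm z + 1).
  destruct (Hg M (eps / 8) ltac:(lra)) as [N0 HN0].
  destruct (HF N0 z (eps / 4) ltac:(lra)) as [d [Hd Hh]].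
  exists (Rmin d 1). split; [apply Rmin_pos; lra |].
  intros h Hhd. pose proof (Rmin_l d 1). pose proof (Rmin_r d 1).
  specialize (Hh h ltac:(lra)). pose proof (Cnorm_ge0 h).
  assert (Hseg : forall t, 0 <= t <= 1 -> Cnorm (Cadd z (Cmul (RtoC t) h)) <= M).
  { intros t Ht. unfold M. eapply Rle_trans; [apply Cnorm_add |].
    rewrite Cnorm_mul, Cnorm_RtoC, Rabs_right by lra. nra. }
  assert (HA : Cnorm (Csub (Csub (f (Cadd z h)) (f z)) (Csub (F N0 (Cadd z h)) (F N0 z)))
               <= eps / 4 * Cnorm h).
  { apply (C_cv_le (fun K => Csub (F K (Cadd z h)) (F K z)) _ _ _ N0).
    - apply C_cv_sub; apply (unif_cv_disc_pointwise _ _ M); auto.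
      + replace (Cadd z h) with (Cadd z (Cmul (RtoC 1) h)) by (change (RtoC 1) with C1; ring).
        apply Hseg. lra.
      + unfold M; lra.
    - intros K HK. apply Cnorm_increment_diff_le with (D K) (D N0); auto.
      intros t Ht. set (w := Cadd z (Cmul (RtoC t) h)).
      replace (Csub (D K w) (D N0 w)) with (Csub (Csub (D K w) (g w)) (Csub (D N0 w) (g w)))
        by ring.
      eapply Rle_trans; [apply Cnorm_sub |].
      pose proof (HN0 K w HK (Hseg t Ht)). pose proof (HN0 N0 w (le_n _) (Hseg t Ht)). lra. }
  pose proof (HN0 N0 z (le_n _) ltac:(unfold M; lra)).
  replace (Csub (Csub (f (Cadd z h)) (f z)) (Cmul (g z) h)) with
    (Cadd (Csub (Csub (f (Cadd z h)) (f z)) (Csub (F N0 (Cadd z h)) (F N0 z)))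
      (Cadd (Csub (Csub (F N0 (Cadd z h)) (F N0 z)) (Cmul (D N0 z) h))
            (Cmul (Csub (D N0 z) (g z)) h))) by ring.
  eapply Rle_trans; [apply Cnorm_add |].
  eapply Rle_trans; [apply Rplus_le_compat_l, Cnorm_add |].
  rewrite Cnorm_mul.
  assert (Cnorm (Csub (D N0 z) (g z)) * Cnorm h <= eps / 8 * Cnorm h)
    by (apply Rmult_le_compat_r; lra).
  nra.
Qed.

Lemma is_Cderive_Cseries (f f' : nat -> CC -> CC) :
  (forall k w, is_Cderive (f k) w (f' k w)) ->
  normal_on_discs f -> normal_on_discs f' ->
  forall z, is_Cderive (Cseries f) z (Cseries f' z).
Proof.
  intros Hd Hb Hb'. apply (is_Cderive_unif_limit (Cpsum f) (Cpsum f')).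
  - intros N w. apply is_Cderive_Csum. auto.
  - apply Cseries_unif_cv, Hb.
  - apply Cseries_unif_cv, Hb'.
Qed.

Lemma entire_of_is_Cderive f : (forall z, exists l, is_Cderive f z l) -> entire f.
Proof.
  intros H z0. destruct (H z0) as [l Hl]. exists l. intros eps He.
  destruct (Hl (eps / 2) ltac:(lra)) as [d [Hd Hh]].
  exists d; split; auto. intros h [Hh0 Hhd]. specialize (Hh h Hhd).
  assert (h <> C0) by (intros ->; rewrite Cnorm_C0 in Hh0; lra).
  replace (Csub (Cdiv (Csub (f (Cadd z0 h)) (f z0)) h) l)
    with (Cdiv (Csub (Csub (f (Cadd z0 h)) (f z0)) (Cmul l h)) h) by (field; auto).
  rewrite Cnorm_div. apply Rmult_lt_reg_r with (Cnorm h); auto.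
  unfold Rdiv. rewrite Rmult_assoc, Rinv_l, Rmult_1_r by lra. nra.
Qed.

(** * The modified Bessel functions *)

Lemma INR_fact_mul_le k m : INR (fact k) * INR (fact m) <= INR (fact (k + m)).
Proof.
  rewrite <- mult_INR. apply le_INR.
  induction k; simpl; [lia |]. pose proof (Nat.mul_le_mono_l _ _ (S k) IHk). nia.
Qed.

Lemma INR_le_pow2 n : INR n <= 2 ^ n.
Proof.
  induction n; [simpl; lra |]. rewrite S_INR. simpl.
  assert (1 <= 2 ^ n) by (apply pow_R1_Rle; lra). lra.
Qed.

Lemma pow_double_add x k m : x ^ (2 * k + m) = x ^ m * (x * x) ^ k.
Proof. rewrite pow_add, pow_mult. replace (x ^ 2) with (x * x) by ring. ring. Qed.

Definition bessel_coef (m k : nat) : R := / (INR (fact k) * INR (fact (k + m))).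

Lemma bessel_coef_pos m k : 0 < bessel_coef m k.
Proof. apply Rinv_0_lt_compat, Rmult_lt_0_compat; apply INR_fact_lt_0. Qed.

Lemma bessel_coef_le m k : bessel_coef m k <= / INR (fact k) * / INR (fact m).
Proof.
  pose proof (INR_fact_lt_0 k). pose proof (INR_fact_lt_0 m).
  pose proof (INR_fact_mul_le k m).
  assert (1 <= INR (fact k)) by (apply (le_INR 1), lt_O_fact).
  assert (INR (fact m) <= INR (fact (k + m))) by nra.
  unfold bessel_coef. rewrite <- Rinv_mult. apply Rinv_le_contravar; [nra |].
  apply Rmult_le_compat_l; lra.
Qed.

Definition bterm (m k : nat) (w : CC) : CC := besselI_term m w k.

(* [C1 * / 2] is the derivative of [w / 2]. *)
Definition dbterm (m k : nat) (w : CC) : CC :=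
  Cmul (RtoC (bessel_coef m k))
    (Cmul (Cmul (RtoC (INR (2 * k + m))) (Cpow (Cdiv w (RtoC 2)) (pred (2 * k + m))))
          (Cmul C1 (Cinv (RtoC 2)))).

Lemma besselI_Cseries m w : besselI m w = Cseries (bterm m) w.
Proof. reflexivity. Qed.

Lemma is_Cderive_bterm m k w : is_Cderive (bterm m k) w (dbterm m k w).
Proof.
  apply is_Cderive_scal.
  apply (is_Cderive_comp (fun u => Cpow u (2 * k + m)) (fun w => Cdiv w (RtoC 2))).
  - apply (is_Cderive_scal_r (fun w => w)), is_Cderive_id.
  - apply is_Cderive_pow.
Qed.

Lemma Cnorm_half w : Cnorm (Cdiv w (RtoC 2)) = Cnorm w / 2.
Proof. rewrite Cnorm_div, Cnorm_RtoC, Rabs_right by lra. reflexivity. Qed.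

Lemma Cnorm_bterm m k w : Cnorm (bterm m k w) = bessel_coef m k * (Cnorm w / 2) ^ (2 * k + m).
Proof.
  unfold bterm, besselI_term. fold (bessel_coef m k).
  rewrite Cnorm_mul, Cnorm_RtoC, Cnorm_pow, Cnorm_half, Rabs_right; [reflexivity |].
  left; apply bessel_coef_pos.
Qed.

Lemma Cnorm_dbterm m k w : Cnorm (dbterm m k w) =
  bessel_coef m k * (INR (2 * k + m) * (Cnorm w / 2) ^ pred (2 * k + m) / 2).
Proof.
  unfold dbterm.
  rewrite !Cnorm_mul, !Cnorm_RtoC, Cnorm_pow, Cnorm_half, Cnorm_C1, Cnorm_inv, Cnorm_RtoC.
  rewrite (Rabs_right (bessel_coef m k)) by (left; apply bessel_coef_pos).
  rewrite (Rabs_right (INR _)) by (apply Rle_ge, pos_INR).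
  rewrite (Rabs_right 2) by lra. unfold Rdiv. ring.
Qed.

Lemma pow_exp_term_le_compat q Q m k : 0 <= q <= Q ->
  q ^ m / INR (fact m) * exp_term (q * q) k <= Q ^ m / INR (fact m) * exp_term (Q * Q) k.
Proof.
  intro Hq. pose proof (INR_fact_lt_0 m). pose proof (INR_fact_lt_0 k).
  assert (q ^ m <= Q ^ m) by (apply pow_incr; lra).
  assert ((q * q) ^ k <= (Q * Q) ^ k) by (apply pow_incr; split; nra).
  assert (0 <= q ^ m) by (apply pow_le; lra). assert (0 <= (q * q) ^ k) by (apply pow_le; nra).
  unfold exp_term, Rdiv.
  apply Rmult_le_compat; [| | apply Rmult_le_compat_r | apply Rmult_le_compat_l]; auto;
    repeat apply Rmult_le_pos; auto; left; apply Rinv_0_lt_compat; auto.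
Qed.

Lemma Cnorm_bterm_le m k w :
  Cnorm (bterm m k w) <= (Cnorm w / 2) ^ m / INR (fact m) * exp_term ((Cnorm w / 2) * (Cnorm w / 2)) k.
Proof.
  rewrite Cnorm_bterm, pow_double_add. set (q := Cnorm w / 2).
  assert (0 <= q) by (unfold q; pose proof (Cnorm_ge0 w); lra).
  assert (0 <= q ^ m * (q * q) ^ k) by (apply Rmult_le_pos; apply pow_le; nra).
  pose proof (bessel_coef_le m k).
  unfold exp_term, Rdiv. nra.
Qed.

(* Shifting the order by one absorbs the factor (2k + m + 1)/2 <= k + m + 1. *)
Lemma Cnorm_dbterm_S_le m k w :
  Cnorm (dbterm (S m) k w)
  <= (Cnorm w / 2) ^ m / INR (fact m) * exp_term ((Cnorm w / 2) * (Cnorm w / 2)) k.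
Proof.
  rewrite Cnorm_dbterm. set (q := Cnorm w / 2).
  assert (Hq : 0 <= q) by (unfold q; pose proof (Cnorm_ge0 w); lra).
  replace (pred (2 * k + S m)) with (2 * k + m)%nat by lia. rewrite pow_double_add.
  assert (Hcoef : bessel_coef (S m) k * INR (2 * k + S m) / 2 <= bessel_coef m k).
  { unfold bessel_coef. replace (k + S m)%nat with (S (k + m)) by lia.
    change (fact (S (k + m))) with (S (k + m) * fact (k + m))%nat. rewrite mult_INR.
    pose proof (INR_fact_lt_0 k). pose proof (INR_fact_lt_0 (k + m)).
    assert (HS : 0 < INR (S (k + m))) by (apply lt_0_INR; lia).
    assert (INR (2 * k + S m) <= 2 * INR (S (k + m)))
      by (apply Rle_trans with (INR (2 * S (k + m))); [apply le_INR; lia |];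
          rewrite mult_INR; simpl; lra).
    apply Rle_trans with (/ (INR (fact k) * (INR (S (k + m)) * INR (fact (k + m))))
                          * (2 * INR (S (k + m))) / 2).
    - unfold Rdiv. apply Rmult_le_compat_r; [lra |]. apply Rmult_le_compat_l; auto.
      left; apply Rinv_0_lt_compat; repeat apply Rmult_lt_0_compat; auto.
    - right. field. repeat split; lra. }
  pose proof (bessel_coef_le m k). pose proof (bessel_coef_pos (S m) k).
  assert (0 <= q ^ m * (q * q) ^ k) by (apply Rmult_le_pos; apply pow_le; nra).
  apply Rle_trans with (bessel_coef m k * (q ^ m * (q * q) ^ k)).
  - replace (bessel_coef (S m) k * (INR (2 * k + S m) * (q ^ m * (q * q) ^ k) / 2))
      with (bessel_coef (S m) k * INR (2 * k + S m) / 2 * (q ^ m * (q * q) ^ k)) by (unfold Rdiv; ring).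
    apply Rmult_le_compat_r; auto.
  - unfold exp_term, Rdiv. nra.
Qed.

Lemma normal_on_discs_bterm m : normal_on_discs (bterm m).
Proof.
  intro M. set (Q := Rabs M + 1).
  exists (fun k => Q ^ m / INR (fact m) * exp_term (Q * Q) k). split; [| split].
  - intro k. apply Rmult_le_pos; [| apply exp_term_nonneg; unfold Q; pose proof (Rabs_pos M); nra].
    unfold Rdiv. apply Rmult_le_pos; [apply pow_le; unfold Q; pose proof (Rabs_pos M); lra |].
    left; apply Rinv_0_lt_compat, INR_fact_lt_0.
  - apply summable_scal, summable_exp_term.
  - intros k w Hw. eapply Rle_trans; [apply Cnorm_bterm_le |].
    apply pow_exp_term_le_compat. pose proof (Cnorm_ge0 w). pose proof (Rle_abs M).
    unfold Q. lra.
Qed.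

Lemma normal_on_discs_dbterm m : normal_on_discs (dbterm m).
Proof.
  intro M. set (Q := 2 * (Rabs M + 1)).
  assert (HQ : 2 <= Q) by (unfold Q; pose proof (Rabs_pos M); lra).
  exists (fun k => Q ^ m * exp_term (Q * Q) k). split; [| split].
  - intro k. apply Rmult_le_pos; [apply pow_le; lra | apply exp_term_nonneg; nra].
  - apply summable_scal, summable_exp_term.
  - intros k w Hw. rewrite Cnorm_dbterm. set (n := (2 * k + m)%nat).
    assert (Hw2 : 0 <= Cnorm w / 2 <= Q / 2).
    { pose proof (Cnorm_ge0 w). pose proof (Rle_abs M). unfold Q. lra. }
    (* INR n <= 2^n and (|w|/2)^(n-1) <= (Q/2)^n since Q/2 >= 1 *)
    assert (Hpow : INR n * (Cnorm w / 2) ^ pred n / 2 <= Q ^ n).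
    { replace (Q ^ n) with (2 ^ n * (Q / 2) ^ n) by (rewrite <- Rpow_mult_distr; f_equal; field).
      assert ((Cnorm w / 2) ^ pred n <= (Q / 2) ^ n).
      { apply Rle_trans with ((Q / 2) ^ pred n); [apply pow_incr; lra |].
        apply Rle_pow; [lra | lia]. }
      pose proof (INR_le_pow2 n). pose proof (pos_INR n).
      assert (0 <= (Cnorm w / 2) ^ pred n) by (apply pow_le; lra).
      assert (INR n * (Cnorm w / 2) ^ pred n <= 2 ^ n * (Q / 2) ^ n)
        by (apply Rmult_le_compat; auto).
      assert (0 <= INR n * (Cnorm w / 2) ^ pred n) by (apply Rmult_le_pos; auto). lra. }
    unfold n in Hpow. rewrite pow_double_add in Hpow.
    pose proof (bessel_coef_le m k). pose proof (bessel_coef_pos m k).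
    pose proof (INR_fact_lt_0 m). assert (1 <= INR (fact m)) by (apply (le_INR 1), lt_O_fact).
    assert (/ INR (fact m) <= 1) by (rewrite <- Rinv_1; apply Rinv_le_contravar; lra).
    assert (0 <= INR n * (Cnorm w / 2) ^ pred n / 2).
    { unfold Rdiv. repeat apply Rmult_le_pos; [apply pos_INR | apply pow_le; lra | lra]. }
    assert (0 <= Q ^ m * (Q * Q) ^ k) by (apply Rmult_le_pos; apply pow_le; nra).
    fold n in Hpow. unfold exp_term.
    apply Rle_trans with (/ INR (fact k) * (Q ^ m * (Q * Q) ^ k)); [| right; ring].
    apply Rmult_le_compat; [lra | lra | | exact Hpow].
    assert (0 < / INR (fact k)) by apply Rinv_0_lt_compat, INR_fact_lt_0. nra.
Qed.

Definition dbesselI (m : nat) (w : CC) : CC := Cseries (dbterm m) w.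

Lemma is_Cderive_besselI m w : is_Cderive (besselI m) w (dbesselI m w).
Proof.
  apply is_Cderive_Cseries;
    [intros; apply is_Cderive_bterm | apply normal_on_discs_bterm | apply normal_on_discs_dbterm].
Qed.

Lemma Cseries_exp_bound (f : nat -> CC -> CC) w q m :
  normal_on_discs f -> 0 <= q ->
  (forall k, Cnorm (f k w) <= q ^ m / INR (fact m) * exp_term (q * q) k) ->
  Cnorm (Cseries f w) <= q ^ m / INR (fact m) * exp (q * q).
Proof.
  intros Hf Hq Hk. apply Cnorm_Cseries_le; auto. intro n.
  eapply Rle_trans; [apply Rsum_le, Hk |]. rewrite Rsum_scal.
  apply Rmult_le_compat_l; [| apply Rsum_exp_term_le; nra].
  unfold Rdiv. apply Rmult_le_pos; [apply pow_le; auto |].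
  left; apply Rinv_0_lt_compat, INR_fact_lt_0.
Qed.

Lemma Cnorm_besselI_le m w :
  Cnorm (besselI m w) <= (Cnorm w / 2) ^ m / INR (fact m) * exp ((Cnorm w / 2) * (Cnorm w / 2)).
Proof.
  rewrite besselI_Cseries.
  apply Cseries_exp_bound; [apply normal_on_discs_bterm | | intro k; apply Cnorm_bterm_le].
  pose proof (Cnorm_ge0 w); lra.
Qed.

Lemma Cnorm_dbesselI_S_le m w :
  Cnorm (dbesselI (S m) w) <= (Cnorm w / 2) ^ m / INR (fact m) * exp ((Cnorm w / 2) * (Cnorm w / 2)).
Proof.
  apply (Cseries_exp_bound (dbterm (S m)));
    [apply normal_on_discs_dbterm | | intro k; apply Cnorm_dbterm_S_le].
  pose proof (Cnorm_ge0 w); lra.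
Qed.


Lemma Csum_ext f g n : (forall k, f k = g k) -> Csum f n = Csum g n.
Proof. intro H; induction n; simpl; [reflexivity | rewrite IHn, H; reflexivity]. Qed.

Lemma Cseries_conj f g z z' :
  normal_on_discs f -> (forall k, g k z' = Cconj (f k z)) ->
  Cseries g z' = Cconj (Cseries f z).
Proof.
  intros Hf Hgf. apply Clim_eq. intros eps He.
  destruct (C_cv_conj _ _ (Cseries_cv f Hf z) eps He) as [N HN]. exists N. intros n Hn.
  replace (Cpsum g n z') with (Cconj (Cpsum f n z)); [apply HN, Hn |].
  unfold Cpsum. rewrite Cconj_Csum. apply Csum_ext. intro k. symmetry. apply Hgf.
Qed.

Lemma besselI_conj m w : besselI m (Cconj w) = Cconj (besselI m w).
Proof.
  rewrite !besselI_Cseries. apply Cseries_conj; [apply normal_on_discs_bterm |].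
  intro k. unfold bterm, besselI_term.
  rewrite Cconj_mul, Cconj_RtoC, Cconj_pow, Cconj_div, Cconj_RtoC. reflexivity.
Qed.

(** * Growth of the coefficients *)

Lemma exp_mult_INR x n : exp (INR n * x) = exp x ^ n.
Proof.
  induction n; [simpl; rewrite Rmult_0_l; apply exp_0 |].
  rewrite S_INR, Rmult_plus_distr_r, Rmult_1_l, exp_plus, IHn. simpl. ring.
Qed.

(* From m^m / m! <= e^m. *)
Lemma sqrt_pow_div_fact_le m : (1 <= m)%nat ->
  sqrt (INR m) ^ m / INR (fact m) <= exp 1 ^ m / sqrt (INR m) ^ m.
Proof.
  intro Hm. set (s := sqrt (INR m)).
  assert (HmR : 0 < INR m) by (apply lt_0_INR; lia).
  assert (Hs : 0 < s ^ m) by (apply pow_lt, sqrt_lt_R0, HmR).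
  assert (Hss : s ^ m * s ^ m = INR m ^ m)
    by (rewrite <- Rpow_mult_distr; unfold s; rewrite sqrt_sqrt; lra).
  pose proof (pow_div_fact_le_exp (INR m) m ltac:(lra)) as Hf.
  rewrite <- (Rmult_1_r (INR m)) in Hf at 2. rewrite exp_mult_INR in Hf.
  pose proof (INR_fact_lt_0 m).
  apply Rmult_le_reg_r with (s ^ m); [exact Hs |].
  replace (exp 1 ^ m / s ^ m * s ^ m) with (exp 1 ^ m) by (field; lra).
  replace (s ^ m / INR (fact m) * s ^ m) with (INR m ^ m / INR (fact m)) by (rewrite <- Hss; field; lra).
  exact Hf.
Qed.

Lemma summable_sqrt_pow_div_fact C : 0 <= C ->
  summable (fun k => (C * sqrt (INR (S k))) ^ S k / INR (fact (S k))).
Proof.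
  intro HC. set (D := 2 * C * exp 1). pose proof (exp_pos 1).
  assert (HD : 0 <= D) by (unfold D; nra).
  destruct (INR_unbounded (D * D)) as [N HN].
  apply (summable_geometric_tail _ N).
  - intro k. unfold Rdiv. apply Rmult_le_pos; [apply pow_le, Rmult_le_pos; auto; apply sqrt_pos |].
    left; apply Rinv_0_lt_compat, INR_fact_lt_0.
  - intros k Hk. set (m := S k). set (s := sqrt (INR m)).
    assert (Hm : 0 < INR m) by (unfold m; apply lt_0_INR; lia).
    assert (Hs : 0 < s) by (apply sqrt_lt_R0; auto).
    (* for m > D^2 the ratio C e / sqrt m is at most 1/2 *)
    assert (HsD : D <= s).
    { assert (D * D <= INR m) by (unfold m; rewrite S_INR; apply le_INR in Hk; lra).
      unfold s. rewrite <- (sqrt_square D HD). apply sqrt_le_1_alt. lra. }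
    pose proof (sqrt_pow_div_fact_le m ltac:(unfold m; lia)) as Hf. fold s in Hf.
    apply Rle_trans with ((C * exp 1 / s) ^ m).
    + replace ((C * exp 1 / s) ^ m) with (C ^ m * (exp 1 ^ m / s ^ m))
        by (unfold Rdiv; rewrite !Rpow_mult_distr, pow_inv; ring).
      rewrite Rpow_mult_distr. unfold Rdiv at 1. rewrite Rmult_assoc.
      apply Rmult_le_compat_l; [apply pow_le; auto | exact Hf].
    + apply Rle_trans with ((/ 2) ^ m); [apply pow_incr; split |].
      * apply Rmult_le_pos; [nra | left; apply Rinv_0_lt_compat; auto].
      * apply Rmult_le_reg_r with s; [auto |]. unfold Rdiv.
        rewrite Rmult_assoc, Rinv_l, Rmult_1_r by lra. unfold D in HsD. lra.
      * unfold m. simpl. assert (0 <= (/ 2) ^ k) by (apply pow_le; lra). lra.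
Qed.

Lemma sinh_pos x : 0 < x -> 0 < sinh x.
Proof. intro. rewrite <- sinh_0. apply sinh_lt, H. Qed.

Lemma Cnorm_Csinh_ge u : 0 <= Re u -> sinh (Re u) <= Cnorm (Csinh u).
Proof.
  intro Hx. unfold Csinh. rewrite Cnorm_div, Cnorm_RtoC, Rabs_right by lra.
  unfold sinh. apply Rmult_le_compat_r; [lra |].
  set (x := Re u). set (y := Im u).
  assert (exp (- x) <= exp x) by (apply exp_le_compat; unfold x; lra).
  apply Cnorm_ge_sq; [lra |]. simpl. fold x y. rewrite cos_neg, sin_neg.
  pose proof (sin2_cos2 y) as Hsc. unfold Rsqr in Hsc.
  pose proof (exp_pos x). pose proof (exp_pos (- x)).
  assert (0 <= sin y * sin y) by nra.
  assert ((exp x - exp (- x)) * (exp x - exp (- x)) * (sin y * sin y)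
          <= (exp x + exp (- x)) * (exp x + exp (- x)) * (sin y * sin y))
    by (apply Rmult_le_compat_r; nra).
  assert (Hpy : forall a, a = a * (sin y * sin y) + a * (cos y * cos y))
    by (intro a; rewrite <- Rmult_plus_distr_l, Hsc; ring).
  rewrite (Hpy ((exp x - exp (- x)) * (exp x - exp (- x)))) at 1. lra.
Qed.

Lemma Cnorm_Ccosh_le u : Cnorm (Ccosh u) <= cosh (Re u).
Proof.
  unfold Ccosh. rewrite Cnorm_div, Cnorm_RtoC, Rabs_right by lra.
  unfold cosh. apply Rmult_le_compat_r; [lra |].
  set (x := Re u). set (y := Im u).
  pose proof (exp_pos x). pose proof (exp_pos (- x)).
  apply Cnorm_le_sq; [lra |]. simpl. fold x y. rewrite cos_neg, sin_neg.
  pose proof (sin2_cos2 y) as Hsc. unfold Rsqr in Hsc.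
  assert (0 <= sin y * sin y) by nra.
  assert ((exp x - exp (- x)) * (exp x - exp (- x)) * (sin y * sin y)
          <= (exp x + exp (- x)) * (exp x + exp (- x)) * (sin y * sin y))
    by (apply Rmult_le_compat_r; nra).
  assert (Hpy : forall a, a = a * (sin y * sin y) + a * (cos y * cos y))
    by (intro a; rewrite <- Rmult_plus_distr_l, Hsc; ring).
  rewrite (Hpy ((exp x + exp (- x)) * (exp x + exp (- x)))) at 1. lra.
Qed.

Lemma coth_le t x : 0 < t <= x -> cosh x / sinh x <= cosh t / sinh t.
Proof.
  intro Ht. pose proof (sinh_pos t ltac:(lra)). pose proof (sinh_pos x ltac:(lra)).
  (* cosh t sinh x - cosh x sinh t = sinh (x - t) >= 0 *)
  assert (cosh x * sinh t <= cosh t * sinh x).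
  { unfold cosh, sinh.
    assert (exp t * exp (- x) <= exp x * exp (- t)).
    { rewrite <- !exp_plus. apply exp_le_compat. lra. }
    nra. }
  apply Rmult_le_reg_r with (sinh x * sinh t); [nra |].
  replace (cosh x / sinh x * (sinh x * sinh t)) with (cosh x * sinh t) by (field; lra).
  replace (cosh t / sinh t * (sinh x * sinh t)) with (cosh t * sinh x) by (field; lra).
  exact H1.
Qed.

Lemma Cnorm_Ccoth_le u t : 0 < t <= Re u -> Cnorm (Ccoth u) <= cosh t / sinh t.
Proof.
  intro Ht. unfold Ccoth. rewrite Cnorm_div.
  pose proof (Cnorm_Csinh_ge u ltac:(lra)). pose proof (sinh_pos (Re u) ltac:(lra)).
  pose proof (Cnorm_Ccosh_le u). pose proof (Cnorm_ge0 (Ccosh u)).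
  eapply Rle_trans; [| apply coth_le, Ht].
  unfold Rdiv. apply Rmult_le_compat; [lra | left; apply Rinv_0_lt_compat; lra | lra |].
  apply Rinv_le_contravar; lra.
Qed.

Lemma Cnorm_Cinv_Csinh_le u t : 0 < t <= Re u -> Cnorm (Cinv (Csinh u)) <= / sinh t.
Proof.
  intro Ht. rewrite Cnorm_inv. pose proof (sinh_pos t ltac:(lra)).
  apply Rinv_le_contravar; [lra |].
  eapply Rle_trans; [| apply Cnorm_Csinh_ge; lra].
  destruct (proj2 Ht) as [Hlt | ->]; [left; apply sinh_lt, Hlt | lra].
Qed.

Section Coefficients.
Variables (gamma sigma LL : R).
Hypotheses (hgamma : 0 < gamma) (hsigma : 0 < sigma) (hL : 0 < LL).

Lemma Cnorm_jmg m : Cnorm (jmg gamma m) = INR m * gamma.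
Proof.
  unfold jmg. apply Cnorm_eq_sq; [pose proof (pos_INR m); nra |]. simpl. ring.
Qed.

Lemma Cnorm_sqrt_jmg_div m :
  Cnorm (Cdiv (Csqrt (jmg gamma m)) (RtoC sigma)) = sqrt (INR m) * (sqrt gamma / sigma).
Proof.
  rewrite Cnorm_div, Cnorm_Csqrt, Cnorm_RtoC, Rabs_right, Cnorm_jmg by lra.
  rewrite sqrt_mult by (try apply pos_INR; lra). unfold Rdiv; ring.
Qed.

Definition coef_arg (m : nat) : CC :=
  Cmul (Csqrt (Cmul (jmg gamma m) (RtoC (sigma * sigma)))) (RtoC LL).

Definition coef_arg_min : R := LL * sqrt (gamma * (sigma * sigma) / 2).

Lemma coef_arg_min_pos : 0 < coef_arg_min.
Proof.
  apply Rmult_lt_0_compat; auto. apply sqrt_lt_R0.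
  apply Rdiv_lt_0_compat; [apply Rmult_lt_0_compat; nra | lra].
Qed.

Lemma Re_coef_arg_ge m : (1 <= m)%nat -> coef_arg_min <= Re (coef_arg m).
Proof.
  intro Hm. unfold coef_arg, coef_arg_min.
  replace (Re (Cmul (Csqrt (Cmul (jmg gamma m) (RtoC (sigma * sigma)))) (RtoC LL)))
    with (LL * sqrt ((Cnorm (Cmul (jmg gamma m) (RtoC (sigma * sigma)))
                      + Re (Cmul (jmg gamma m) (RtoC (sigma * sigma)))) / 2))
    by (simpl; ring).
  rewrite Cnorm_mul, Cnorm_jmg, Cnorm_RtoC, Rabs_right by nra.
  apply Rmult_le_compat_l; [lra |]. apply sqrt_le_1_alt.
  apply le_INR in Hm. simpl in *.
  assert (0 < gamma * (sigma * sigma)) by (apply Rmult_lt_0_compat; nra).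
  unfold Rdiv. nra.
Qed.

Definition Ka : R := sqrt gamma / sigma * (cosh coef_arg_min / sinh coef_arg_min).
Definition Kb : R := sqrt gamma / sigma * / sinh coef_arg_min.

Lemma sqrt_gamma_div_sigma_pos : 0 < sqrt gamma / sigma.
Proof. apply Rdiv_lt_0_compat; [apply sqrt_lt_R0 |]; auto. Qed.

Lemma Ka_ge0 : 0 <= Ka.
Proof.
  pose proof sqrt_gamma_div_sigma_pos. pose proof (sinh_pos _ coef_arg_min_pos).
  assert (0 < cosh coef_arg_min) by (unfold cosh; pose proof (exp_pos coef_arg_min);
    pose proof (exp_pos (- coef_arg_min)); lra).
  left. apply Rmult_lt_0_compat; [| apply Rdiv_lt_0_compat]; auto.
Qed.

Lemma Kb_ge0 : 0 <= Kb.
Proof.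
  pose proof sqrt_gamma_div_sigma_pos. pose proof (sinh_pos _ coef_arg_min_pos).
  left. apply Rmult_lt_0_compat; [| apply Rinv_0_lt_compat]; auto.
Qed.

Lemma Cnorm_a_coef_le m : (1 <= m)%nat -> Cnorm (a_coef gamma sigma LL m) <= Ka * sqrt (INR m).
Proof.
  intro Hm. unfold a_coef. rewrite Cnorm_mul, Cnorm_sqrt_jmg_div. fold (coef_arg m).
  pose proof (Cnorm_Ccoth_le (coef_arg m) coef_arg_min
                (conj coef_arg_min_pos (Re_coef_arg_ge m Hm))).
  pose proof (sqrt_pos (INR m)). pose proof sqrt_gamma_div_sigma_pos.
  unfold Ka. rewrite (Rmult_comm _ (sqrt (INR m))), <- Rmult_assoc.
  apply Rmult_le_compat_l; [nra | auto].
Qed.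

Lemma Cnorm_b_coef_le m : (1 <= m)%nat -> Cnorm (b_coef gamma sigma LL m) <= Kb * sqrt (INR m).
Proof.
  intro Hm. unfold b_coef. rewrite Cnorm_mul, Cnorm_sqrt_jmg_div. fold (coef_arg m).
  pose proof (Cnorm_Cinv_Csinh_le (coef_arg m) coef_arg_min
                (conj coef_arg_min_pos (Re_coef_arg_ge m Hm))).
  pose proof (sqrt_pos (INR m)). pose proof sqrt_gamma_div_sigma_pos.
  unfold Kb. rewrite (Rmult_comm _ (sqrt (INR m))), <- Rmult_assoc.
  apply Rmult_le_compat_l; [nra | auto].
Qed.

End Coefficients.

Section ChannelTerms.
Variables (gamma LL r phi phi0 : R).

(* [channel_term (a_coef m) (b_coef m) m m] is [term_pos] and, with conjugated
   coefficients and phase index [- m], [term_neg]. *)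
Definition gauss_factor (al z : CC) : CC := Cexp (Copp (Cmul al (Cadd (RtoC (r * r)) (Cmul z z)))).
Definition bessel_factor (be : CC) (m : nat) (z : CC) : CC :=
  besselI m (Cmul (Cmul (RtoC 2) be) (Cmul z (RtoC r))).
Definition channel_term (al be : CC) (s : R) (m : nat) (z : CC) : CC :=
  Cmul (Cmul (RtoC r) (Cmul be (Cmul (gauss_factor al z) (bessel_factor be m z))))
       (phase gamma LL s phi phi0 z).

Definition gauss_factor' (al z : CC) : CC :=
  Cmul (gauss_factor al z) (Copp (Cmul al (Cmul (RtoC 2) z))).
Definition bessel_factor' (be : CC) (m : nat) (z : CC) : CC :=
  Cmul (dbesselI m (Cmul (Cmul (RtoC 2) be) (Cmul z (RtoC r)))) (Cmul (Cmul (RtoC 2) be) (RtoC r)).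
Definition phase' (s : R) (z : CC) : CC :=
  Cmul (phase gamma LL s phi phi0 z)
       (Cmul (Cmul Cj (RtoC s)) (Copp (Cmul (RtoC (gamma * LL)) (Cmul (RtoC 2) z)))).
Definition channel_term' (al be : CC) (s : R) (m : nat) (z : CC) : CC :=
  Cmul (Cmul (RtoC r) be)
    (Cadd (Cadd (Cmul (Cmul (gauss_factor' al z) (bessel_factor be m z)) (phase gamma LL s phi phi0 z))
                (Cmul (Cmul (gauss_factor al z) (bessel_factor' be m z)) (phase gamma LL s phi phi0 z)))
          (Cmul (Cmul (gauss_factor al z) (bessel_factor be m z)) (phase' s z))).

Lemma is_Cderive_gauss_factor al z : is_Cderive (gauss_factor al) z (gauss_factor' al z).
Proof.
  eapply is_Cderive_eq;
    [| apply (is_Cderive_comp Cexp (fun z => Copp (Cmul al (Cadd (RtoC (r * r)) (Cmul z z)))));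
       [apply is_Cderive_opp, is_Cderive_scal, is_Cderive_plus;
          [apply is_Cderive_const | apply is_Cderive_sqr] | apply is_Cderive_exp]].
  unfold gauss_factor', gauss_factor. ring.
Qed.

Lemma is_Cderive_bessel_factor be m z : is_Cderive (bessel_factor be m) z (bessel_factor' be m z).
Proof.
  eapply is_Cderive_eq;
    [| apply (is_Cderive_comp (besselI m) (fun z => Cmul (Cmul (RtoC 2) be) (Cmul z (RtoC r))));
       [apply is_Cderive_scal, (is_Cderive_scal_r (fun w => w)), is_Cderive_id
       | apply is_Cderive_besselI]].
  unfold bessel_factor'. ring.
Qed.

Lemma is_Cderive_phase s z : is_Cderive (phase gamma LL s phi phi0) z (phase' s z).
Proof.
  eapply is_Cderive_eq;
    [| apply (is_Cderive_comp Cexp (fun z => Cmul (Cmul Cj (RtoC s))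
              (Csub (RtoC (phi - phi0)) (Cmul (RtoC (gamma * LL)) (Cmul z z)))));
       [apply is_Cderive_scal, is_Cderive_minus;
          [apply is_Cderive_const | apply is_Cderive_scal, is_Cderive_sqr] | apply is_Cderive_exp]].
  unfold phase', phase, Csub. ring.
Qed.

Lemma is_Cderive_channel_term al be s m z :
  is_Cderive (channel_term al be s m) z (channel_term' al be s m z).
Proof.
  eapply is_Cderive_eq;
    [| apply (is_Cderive_mult
               (fun z => Cmul (RtoC r) (Cmul be (Cmul (gauss_factor al z) (bessel_factor be m z))))
               (phase gamma LL s phi phi0));
       [apply is_Cderive_scal, is_Cderive_scal, is_Cderive_mult;
          [apply is_Cderive_gauss_factor | apply is_Cderive_bessel_factor]
       | apply is_Cderive_phase]].
  unfold channel_term'. ring.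
Qed.

End ChannelTerms.

Lemma Rmult3_le_compat a b c A B C : 0 <= a <= A -> 0 <= b <= B -> 0 <= c <= C ->
  a * b * c <= A * B * C.
Proof. intros. apply Rmult_le_compat; [nra | lra | apply Rmult_le_compat |]; lra. Qed.

Lemma pow_div_fact_exp_le_compat q Q m : 0 <= q <= Q ->
  q ^ m / INR (fact m) * exp (q * q) <= Q ^ m / INR (fact m) * exp (Q * Q).
Proof.
  intro H. pose proof (INR_fact_lt_0 m).
  apply Rmult_le_compat.
  - unfold Rdiv. apply Rmult_le_pos; [apply pow_le; lra | left; apply Rinv_0_lt_compat; lra].
  - left; apply exp_pos.
  - unfold Rdiv. apply Rmult_le_compat_r; [left; apply Rinv_0_lt_compat; lra | apply pow_incr; lra].
  - apply exp_le_compat. apply Rmult_le_compat; lra.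
Qed.

Section FactorBounds.
Variables (gamma LL r phi phi0 : R).
Hypothesis hr : 0 < r.

Lemma Cnorm_gauss_factor_le al z X : Cnorm z <= X ->
  Cnorm (gauss_factor r al z) <= exp (Cnorm al * (r * r + X * X)).
Proof.
  intro Hz. eapply Rle_trans; [apply Cnorm_Cexp_le | apply exp_le_compat].
  rewrite Cnorm_opp, Cnorm_mul. apply Rmult_le_compat_l; [apply Cnorm_ge0 |].
  eapply Rle_trans; [apply Cnorm_add |]. rewrite Cnorm_RtoC, Cnorm_mul, Rabs_right by nra.
  pose proof (Cnorm_ge0 z). apply Rplus_le_compat_l, Rmult_le_compat; lra.
Qed.

Lemma Cnorm_gauss_factor' al z :
  Cnorm (gauss_factor' r al z) = Cnorm (gauss_factor r al z) * (Cnorm al * (2 * Cnorm z)).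
Proof.
  unfold gauss_factor'. rewrite Cnorm_mul, Cnorm_opp, !Cnorm_mul, Cnorm_RtoC, Rabs_right by lra.
  reflexivity.
Qed.

Lemma Cnorm_phase_le s z X : Cnorm z <= X ->
  Cnorm (phase gamma LL s phi phi0 z)
  <= exp (Rabs s * (Rabs (phi - phi0) + Rabs (gamma * LL) * (X * X))).
Proof.
  intro Hz. eapply Rle_trans; [apply Cnorm_Cexp_le | apply exp_le_compat].
  rewrite !Cnorm_mul, Cnorm_Cj, Cnorm_RtoC, Rmult_1_l.
  apply Rmult_le_compat_l; [apply Rabs_pos |].
  eapply Rle_trans; [apply Cnorm_sub |]. rewrite Cnorm_RtoC, !Cnorm_mul, Cnorm_RtoC.
  pose proof (Cnorm_ge0 z). pose proof (Rabs_pos (gamma * LL)).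
  apply Rplus_le_compat_l, Rmult_le_compat_l, Rmult_le_compat; lra.
Qed.

Lemma Cnorm_phase' s z : Cnorm (phase' gamma LL phi phi0 s z) =
  Cnorm (phase gamma LL s phi phi0 z) * (Rabs s * (Rabs (gamma * LL) * (2 * Cnorm z))).
Proof.
  unfold phase'. rewrite !Cnorm_mul, Cnorm_opp, !Cnorm_mul, Cnorm_Cj, !Cnorm_RtoC.
  rewrite (Rabs_right 2) by lra. ring.
Qed.

Lemma Cnorm_bessel_arg_half be z :
  Cnorm (Cmul (Cmul (RtoC 2) be) (Cmul z (RtoC r))) / 2 = Cnorm be * Cnorm z * r.
Proof. rewrite !Cnorm_mul, !Cnorm_RtoC, !Rabs_right by lra. field. Qed.

Lemma Cnorm_bessel_factor_le be m z X : Cnorm z <= X ->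
  Cnorm (bessel_factor r be m z)
  <= (Cnorm be * X * r) ^ m / INR (fact m) * exp ((Cnorm be * X * r) * (Cnorm be * X * r)).
Proof.
  intro Hz. eapply Rle_trans; [apply Cnorm_besselI_le |]. rewrite Cnorm_bessel_arg_half.
  pose proof (Cnorm_ge0 be). pose proof (Cnorm_ge0 z).
  apply pow_div_fact_exp_le_compat. split; [apply Rmult_le_pos; nra |].
  apply Rmult_le_compat_r, Rmult_le_compat_l; lra.
Qed.

Lemma Cnorm_bessel_factor'_S_le be m z X : Cnorm z <= X ->
  Cnorm (bessel_factor' r be (S m) z)
  <= (Cnorm be * X * r) ^ m / INR (fact m) * exp ((Cnorm be * X * r) * (Cnorm be * X * r))
     * (2 * Cnorm be * r).
Proof.
  intro Hz. unfold bessel_factor'. rewrite Cnorm_mul.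
  apply Rmult_le_compat; [apply Cnorm_ge0 | apply Cnorm_ge0 | |].
  - eapply Rle_trans; [apply Cnorm_dbesselI_S_le |]. rewrite Cnorm_bessel_arg_half.
    pose proof (Cnorm_ge0 be). pose proof (Cnorm_ge0 z).
    apply pow_div_fact_exp_le_compat. split; [apply Rmult_le_pos; nra |].
    apply Rmult_le_compat_r, Rmult_le_compat_l; lra.
  - rewrite !Cnorm_mul, !Cnorm_RtoC, !Rabs_right by lra. lra.
Qed.

End FactorBounds.

Lemma sqrt_INR_ge1 m : (1 <= m)%nat -> 1 <= sqrt (INR m).
Proof. intro H. rewrite <- sqrt_1. apply sqrt_le_1_alt. apply (le_INR 1), H. Qed.

Lemma sqrt_INR_le m : (1 <= m)%nat -> sqrt (INR m) <= INR m.
Proof.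
  intro H. pose proof (sqrt_INR_ge1 m H). pose proof (sqrt_sqrt (INR m) (pos_INR m)). nra.
Qed.

Section SeriesBounds.
Variables (gamma LL r phi phi0 : R).
Hypothesis hr : 0 < r.
Variables (al be : nat -> CC) (s : nat -> R) (Ka Kb : R).
Hypotheses (hKa : 0 <= Ka) (hKb : 0 <= Kb)
  (hal : forall m, (1 <= m)%nat -> Cnorm (al m) <= Ka * sqrt (INR m))
  (hbe : forall m, (1 <= m)%nat -> Cnorm (be m) <= Kb * sqrt (INR m))
  (hs : forall m, (1 <= m)%nat -> Rabs (s m) <= INR m).

Section OnDisc.
Variable X : R.
Hypothesis hX : 1 <= X.

Definition bessel_scale : R := Kb * X * r + 1.
Definition gauss_rate : R := Ka * (r * r + X * X).
Definition phase_rate : R := Rabs (phi - phi0) + Rabs (gamma * LL) * (X * X).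
Definition growth_rate : R := gauss_rate + bessel_scale * bessel_scale + phase_rate.

Definition majorant (m : nat) : R :=
  exp (INR m * growth_rate) * ((bessel_scale * sqrt (INR m)) ^ m / INR (fact m)).

Lemma bessel_scale_ge1 : 1 <= bessel_scale.
Proof. unfold bessel_scale. assert (0 <= Kb * X * r) by (apply Rmult_le_pos; nra). lra. Qed.

Lemma bessel_power_ge0 m : 0 <= (bessel_scale * sqrt (INR m)) ^ m / INR (fact m).
Proof.
  pose proof bessel_scale_ge1. pose proof (sqrt_pos (INR m)). pose proof (INR_fact_lt_0 m).
  unfold Rdiv. apply Rmult_le_pos; [apply pow_le; nra | left; apply Rinv_0_lt_compat; lra].
Qed.

Lemma majorant_ge0 m : 0 <= majorant m.
Proof. apply Rmult_le_pos; [left; apply exp_pos | apply bessel_power_ge0]. Qed.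

Lemma majorant_split m : majorant m =
  exp (INR m * gauss_rate)
  * (exp (INR m * (bessel_scale * bessel_scale)) * ((bessel_scale * sqrt (INR m)) ^ m / INR (fact m)))
  * exp (INR m * phase_rate).
Proof.
  unfold majorant, growth_rate.
  rewrite !Rmult_plus_distr_l, !exp_plus. ring.
Qed.

Lemma bessel_arg_le m : (1 <= m)%nat -> Cnorm (be m) * X * r <= bessel_scale * sqrt (INR m).
Proof.
  intro Hm. pose proof (hbe m Hm). pose proof (sqrt_INR_ge1 m Hm). pose proof (Cnorm_ge0 (be m)).
  assert (Cnorm (be m) * X * r <= Kb * sqrt (INR m) * X * r)
    by (apply Rmult_le_compat_r; [lra | apply Rmult_le_compat_r; lra]).
  assert (0 <= Kb * X * r) by (apply Rmult_le_pos; nra).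
  unfold bessel_scale. nra.
Qed.

Lemma gauss_factor_le m z : (1 <= m)%nat -> Cnorm z <= X ->
  Cnorm (gauss_factor r (al m) z) <= exp (INR m * gauss_rate).
Proof.
  intros Hm Hz. eapply Rle_trans; [apply Cnorm_gauss_factor_le, Hz | apply exp_le_compat].
  unfold gauss_rate. rewrite <- Rmult_assoc. apply Rmult_le_compat_r; [nra |].
  pose proof (hal m Hm). pose proof (sqrt_INR_le m Hm).
  assert (Ka * sqrt (INR m) <= Ka * INR m) by (apply Rmult_le_compat_l; lra). lra.
Qed.

Lemma phase_le m z : (1 <= m)%nat -> Cnorm z <= X ->
  Cnorm (phase gamma LL (s m) phi phi0 z) <= exp (INR m * phase_rate).
Proof.
  intros Hm Hz. eapply Rle_trans; [apply Cnorm_phase_le, Hz | apply exp_le_compat].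
  apply Rmult_le_compat_r; [| apply hs, Hm].
  unfold phase_rate. pose proof (Rabs_pos (phi - phi0)). pose proof (Rabs_pos (gamma * LL)). nra.
Qed.

Lemma bessel_factor_le m z : (1 <= m)%nat -> Cnorm z <= X ->
  Cnorm (bessel_factor r (be m) m z)
  <= exp (INR m * (bessel_scale * bessel_scale)) * ((bessel_scale * sqrt (INR m)) ^ m / INR (fact m)).
Proof.
  intros Hm Hz. eapply Rle_trans; [apply (Cnorm_bessel_factor_le r hr _ _ _ X Hz) |].
  eapply Rle_trans; [apply pow_div_fact_exp_le_compat |].
  - split; [apply Rmult_le_pos; [apply Rmult_le_pos; [apply Cnorm_ge0 | lra] | lra] |].
    apply bessel_arg_le, Hm.
  - right. rewrite Rmult_comm. f_equal. f_equal.
    transitivity (bessel_scale * bessel_scale * (sqrt (INR m) * sqrt (INR m))); [ring |].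
    rewrite sqrt_sqrt by apply pos_INR. ring.
Qed.

(* The derivative of I_m has order m - 1, which costs a factor m = m! / (m - 1)!. *)
Lemma bessel_factor'_le m z : (1 <= m)%nat -> Cnorm z <= X ->
  Cnorm (bessel_factor' r (be m) m z)
  <= exp (INR m * (bessel_scale * bessel_scale)) * ((bessel_scale * sqrt (INR m)) ^ m / INR (fact m))
     * (2 * Kb * r * (INR m * sqrt (INR m))).
Proof.
  intros Hm Hz. destruct m as [|m]; [lia |].
  pose proof (bessel_arg_le (S m) Hm). pose proof (hbe (S m) Hm).
  pose proof (sqrt_INR_ge1 (S m) Hm). pose proof bessel_scale_ge1.
  set (sm := sqrt (INR (S m))) in *. set (A := bessel_scale) in *.
  set (q := Cnorm (be (S m)) * X * r) in *.
  assert (Hq : 0 <= q) by (unfold q; apply Rmult_le_pos; [apply Rmult_le_pos; [apply Cnorm_ge0 | lra] | lra]).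
  eapply Rle_trans; [apply (Cnorm_bessel_factor'_S_le r hr _ _ _ X Hz) |]. fold q.
  assert (HAs : 1 <= A * sm) by nra.
  assert (Hpow : q ^ m / INR (fact m) <= INR (S m) * ((A * sm) ^ S m / INR (fact (S m)))).
  { change (fact (S m)) with (S m * fact m)%nat. rewrite mult_INR.
    pose proof (INR_fact_lt_0 m). assert (0 < INR (S m)) by (apply lt_0_INR; lia).
    replace (INR (S m) * ((A * sm) ^ S m / (INR (S m) * INR (fact m))))
      with ((A * sm) ^ S m / INR (fact m)) by (field; lra).
    unfold Rdiv. apply Rmult_le_compat_r; [left; apply Rinv_0_lt_compat; auto |].
    apply Rle_trans with ((A * sm) ^ m); [apply pow_incr; lra |].
    simpl. assert (0 <= (A * sm) ^ m) by (apply pow_le; lra). nra. }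
  assert (Hexp : exp (q * q) <= exp (INR (S m) * (A * A))).
  { apply exp_le_compat. replace (INR (S m)) with (sm * sm) by (apply sqrt_sqrt, pos_INR).
    apply Rle_trans with ((A * sm) * (A * sm)); [apply Rmult_le_compat; lra | right; ring]. }
  assert (Hbe : 2 * Cnorm (be (S m)) * r <= 2 * Kb * sm * r)
    by (apply Rmult_le_compat_r; [lra | pose proof (Cnorm_ge0 (be (S m))); lra]).
  pose proof (bessel_power_ge0 (S m)). fold A sm in H3.
  assert (0 <= q ^ m / INR (fact m))
    by (unfold Rdiv; apply Rmult_le_pos; [apply pow_le; auto | left; apply Rinv_0_lt_compat, INR_fact_lt_0]).
  replace (exp (INR (S m) * (A * A)) * ((A * sm) ^ S m / INR (fact (S m))) * (2 * Kb * r * (INR (S m) * sm)))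
    with ((INR (S m) * ((A * sm) ^ S m / INR (fact (S m)))) * exp (INR (S m) * (A * A)) * (2 * Kb * sm * r))
    by ring.
  apply Rmult_le_compat; [| pose proof (Cnorm_ge0 (be (S m))); nra | | exact Hbe].
  - apply Rmult_le_pos; [auto | left; apply exp_pos].
  - apply Rmult_le_compat; [auto | left; apply exp_pos | exact Hpow | exact Hexp].
Qed.

Lemma factors_le m z : (1 <= m)%nat -> Cnorm z <= X ->
  Cnorm (gauss_factor r (al m) z) * Cnorm (bessel_factor r (be m) m z)
  * Cnorm (phase gamma LL (s m) phi phi0 z) <= majorant m.
Proof.
  intros Hm Hz. rewrite majorant_split.
  apply Rmult3_le_compat; (split; [apply Cnorm_ge0 |]);
    [apply gauss_factor_le | apply bessel_factor_le | apply phase_le]; auto.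
Qed.

Lemma channel_term_le m z : (1 <= m)%nat -> Cnorm z <= X ->
  Cnorm (channel_term gamma LL r phi phi0 (al m) (be m) (s m) m z)
  <= r * Kb * (INR m * INR m) * majorant m.
Proof.
  intros Hm Hz. pose proof (factors_le m z Hm Hz) as Hf.
  unfold channel_term. rewrite !Cnorm_mul, Cnorm_RtoC, Rabs_right by lra.
  pose proof (hbe m Hm). pose proof (sqrt_INR_le m Hm). pose proof (sqrt_INR_ge1 m Hm).
  pose proof (majorant_ge0 m). pose proof (Cnorm_ge0 (be m)).
  assert (sqrt (INR m) <= INR m * INR m) by nra.
  assert (r * Cnorm (be m) <= r * Kb * (INR m * INR m)).
  { rewrite Rmult_assoc. apply Rmult_le_compat_l; [lra |].
    apply Rle_trans with (Kb * sqrt (INR m)); [auto | apply Rmult_le_compat_l; auto]. }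
  replace (r * (Cnorm (be m) * (Cnorm (gauss_factor r (al m) z) * Cnorm (bessel_factor r (be m) m z)))
           * Cnorm (phase gamma LL (s m) phi phi0 z))
    with (r * Cnorm (be m) * (Cnorm (gauss_factor r (al m) z) * Cnorm (bessel_factor r (be m) m z)
          * Cnorm (phase gamma LL (s m) phi phi0 z))) by ring.
  apply Rmult_le_compat; [nra | | auto | exact Hf].
  apply Rmult_le_pos; [apply Rmult_le_pos; apply Cnorm_ge0 | apply Cnorm_ge0].
Qed.

Lemma gauss_factor'_le m z : (1 <= m)%nat -> Cnorm z <= X ->
  Cnorm (gauss_factor' r (al m) z) <= Cnorm (gauss_factor r (al m) z) * (2 * Ka * X * INR m).
Proof.
  intros Hm Hz. rewrite Cnorm_gauss_factor'.
  apply Rmult_le_compat_l; [apply Cnorm_ge0 |].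
  pose proof (hal m Hm). pose proof (sqrt_INR_le m Hm). pose proof (Cnorm_ge0 z).
  pose proof (Cnorm_ge0 (al m)).
  assert (Cnorm (al m) <= Ka * INR m)
    by (apply Rle_trans with (Ka * sqrt (INR m)); [auto | apply Rmult_le_compat_l; auto]).
  replace (2 * Ka * X * INR m) with (Ka * INR m * (2 * X)) by ring.
  apply Rmult_le_compat; lra.
Qed.

Lemma phase'_le m z : (1 <= m)%nat -> Cnorm z <= X ->
  Cnorm (phase' gamma LL phi phi0 (s m) z)
  <= Cnorm (phase gamma LL (s m) phi phi0 z) * (2 * Rabs (gamma * LL) * X * INR m).
Proof.
  intros Hm Hz. rewrite Cnorm_phase'.
  apply Rmult_le_compat_l; [apply Cnorm_ge0 |].
  pose proof (hs m Hm). pose proof (Cnorm_ge0 z). pose proof (Rabs_pos (gamma * LL)).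
  replace (2 * Rabs (gamma * LL) * X * INR m) with (INR m * (Rabs (gamma * LL) * (2 * X))) by ring.
  apply Rmult_le_compat; [apply Rabs_pos | apply Rmult_le_pos; lra | auto |].
  apply Rmult_le_compat_l; lra.
Qed.

Lemma factors'_le m z : (1 <= m)%nat -> Cnorm z <= X ->
  Cnorm (gauss_factor r (al m) z) * Cnorm (bessel_factor' r (be m) m z)
  * Cnorm (phase gamma LL (s m) phi phi0 z)
  <= majorant m * (2 * Kb * r * (INR m * sqrt (INR m))).
Proof.
  intros Hm Hz.
  apply Rle_trans with (exp (INR m * gauss_rate) * (exp (INR m * (bessel_scale * bessel_scale))
    * ((bessel_scale * sqrt (INR m)) ^ m / INR (fact m)) * (2 * Kb * r * (INR m * sqrt (INR m))))
    * exp (INR m * phase_rate)).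
  - apply Rmult3_le_compat; (split; [apply Cnorm_ge0 |]);
      [apply gauss_factor_le | apply bessel_factor'_le | apply phase_le]; auto.
  - right. rewrite majorant_split. ring.
Qed.

Definition deriv_const : R := 2 * Ka * X + 2 * Kb * r + 2 * Rabs (gamma * LL) * X.

(* Each of the three terms of the product rule costs at most a factor m sqrt m,
   and the prefactor |b_m| another sqrt m. *)
Lemma channel_term'_le m z : (1 <= m)%nat -> Cnorm z <= X ->
  Cnorm (channel_term' gamma LL r phi phi0 (al m) (be m) (s m) m z)
  <= r * Kb * deriv_const * (INR m * INR m) * majorant m.
Proof.
  intros Hm Hz. pose proof (factors_le m z Hm Hz) as Hf.
  pose proof (gauss_factor'_le m z Hm Hz). pose proof (phase'_le m z Hm Hz).
  pose proof (factors'_le m z Hm Hz).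
  pose proof (hbe m Hm). pose proof (sqrt_INR_ge1 m Hm).
  pose proof (sqrt_sqrt (INR m) (pos_INR m)). pose proof (majorant_ge0 m).
  pose proof (Rabs_pos (gamma * LL)). pose proof (Cnorm_ge0 (be m)). pose proof (pos_INR m).
  set (mu := INR m) in *. set (sm := sqrt mu) in *. set (G := majorant m) in *.
  set (E := Cnorm (gauss_factor r (al m) z)) in *.
  set (I := Cnorm (bessel_factor r (be m) m z)) in *.
  set (P := Cnorm (phase gamma LL (s m) phi phi0 z)) in *.
  assert (0 <= E) by apply Cnorm_ge0. assert (0 <= I) by apply Cnorm_ge0.
  assert (0 <= P) by apply Cnorm_ge0.
  assert (HmX : 0 <= mu * (sm - 1)) by (apply Rmult_le_pos; lra).
  assert (Ha : 0 <= 2 * Ka * X * mu) by (repeat apply Rmult_le_pos; lra).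
  assert (Hg : 0 <= 2 * Rabs (gamma * LL) * X * mu) by (repeat apply Rmult_le_pos; lra).
  assert (Hsum : Cnorm (gauss_factor' r (al m) z) * I * P + E * Cnorm (bessel_factor' r (be m) m z) * P
                 + E * I * Cnorm (phase' gamma LL phi phi0 (s m) z) <= G * (mu * sm) * deriv_const).
  { assert (Cnorm (gauss_factor' r (al m) z) * I * P <= G * (2 * Ka * X * mu)).
    { apply Rle_trans with (E * I * P * (2 * Ka * X * mu)); [| apply Rmult_le_compat_r; lra].
      replace (E * I * P * (2 * Ka * X * mu)) with (E * (2 * Ka * X * mu) * I * P) by ring.
      apply Rmult_le_compat_r; [auto | apply Rmult_le_compat_r; auto]. }
    assert (E * I * Cnorm (phase' gamma LL phi phi0 (s m) z) <= G * (2 * Rabs (gamma * LL) * X * mu)).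
    { apply Rle_trans with (E * I * (P * (2 * Rabs (gamma * LL) * X * mu)));
        [apply Rmult_le_compat_l; [nra | auto] |].
      rewrite <- Rmult_assoc. apply Rmult_le_compat_r; lra. }
    assert (G * (2 * Ka * X * mu) <= G * (2 * Ka * X * (mu * sm)))
      by (apply Rmult_le_compat_l; [auto | apply Rmult_le_compat_l; [nra | lra]]).
    assert (G * (2 * Rabs (gamma * LL) * X * mu) <= G * (2 * Rabs (gamma * LL) * X * (mu * sm)))
      by (apply Rmult_le_compat_l; [auto | apply Rmult_le_compat_l; [nra | lra]]).
    unfold deriv_const. lra. }
  unfold channel_term'. rewrite Cnorm_mul, Cnorm_mul, Cnorm_RtoC, Rabs_right by lra.
  eapply Rle_trans.
  { apply Rmult_le_compat_l; [apply Rmult_le_pos; [lra | auto] |].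
    eapply Rle_trans; [apply Cnorm_add |]. apply Rplus_le_compat_r, Cnorm_add. }
  rewrite !Cnorm_mul. fold E I P.
  assert (0 <= deriv_const) by (unfold deriv_const; nra).
  apply Rle_trans with (r * (Kb * sm) * (G * (mu * sm) * deriv_const)).
  - apply Rmult_le_compat; [nra | | apply Rmult_le_compat_l | exact Hsum]; [| lra | auto].
    repeat apply Rplus_le_le_0_compat; repeat apply Rmult_le_pos; auto; apply Cnorm_ge0.
  - right. transitivity (r * Kb * deriv_const * (mu * (sm * sm)) * G); [ring |]. rewrite H4. ring.
Qed.

Lemma summable_majorant : summable (fun k => INR (S k) * INR (S k) * majorant (S k)).
Proof.
  pose proof bessel_scale_ge1. pose proof (exp_pos growth_rate).
  apply summable_le with
    (B := fun k => (4 * exp growth_rate * bessel_scale * sqrt (INR (S k))) ^ S k / INR (fact (S k))).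
  2: apply summable_sqrt_pow_div_fact; nra.
  intro k. set (m := S k). pose proof (pos_INR m). pose proof (majorant_ge0 m).
  split; [apply Rmult_le_pos; [nra | auto] |].
  assert (Hm2 : INR m * INR m <= 4 ^ m).
  { pose proof (INR_le_pow2 m). replace (4 ^ m) with (2 ^ m * 2 ^ m)
      by (rewrite <- Rpow_mult_distr; f_equal; ring).
    apply Rmult_le_compat; lra. }
  unfold majorant. rewrite exp_mult_INR.
  replace ((4 * exp growth_rate * bessel_scale * sqrt (INR m)) ^ m / INR (fact m))
    with (4 ^ m * (exp growth_rate ^ m * ((bessel_scale * sqrt (INR m)) ^ m / INR (fact m))))
    by (unfold Rdiv; rewrite !Rpow_mult_distr; ring).
  apply Rmult_le_compat_r; [| exact Hm2].
  apply Rmult_le_pos; [apply pow_le; lra | apply bessel_power_ge0].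
Qed.

End OnDisc.

Definition channel_series (k : nat) (z : CC) : CC :=
  channel_term gamma LL r phi phi0 (al (S k)) (be (S k)) (s (S k)) (S k) z.
Definition channel_series' (k : nat) (z : CC) : CC :=
  channel_term' gamma LL r phi phi0 (al (S k)) (be (S k)) (s (S k)) (S k) z.

Lemma normal_on_discs_channel_series : normal_on_discs channel_series.
Proof.
  intro M. set (X := Rabs M + 1). assert (HX : 1 <= X) by (unfold X; pose proof (Rabs_pos M); lra).
  exists (fun k => r * Kb * (INR (S k) * INR (S k) * majorant X (S k))). split; [| split].
  - intro k. pose proof (majorant_ge0 X HX (S k)). pose proof (pos_INR (S k)).
    apply Rmult_le_pos; [nra | apply Rmult_le_pos; [nra | auto]].
  - apply summable_scal, summable_majorant, HX.
  - intros k z Hz. rewrite <- Rmult_assoc.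
    apply (channel_term_le X HX (S k) z); [lia | unfold X; pose proof (Rle_abs M); lra].
Qed.

Lemma normal_on_discs_channel_series' : normal_on_discs channel_series'.
Proof.
  intro M. set (X := Rabs M + 1). assert (HX : 1 <= X) by (unfold X; pose proof (Rabs_pos M); lra).
  exists (fun k => r * Kb * deriv_const X * (INR (S k) * INR (S k) * majorant X (S k))). split; [| split].
  - intro k. pose proof (majorant_ge0 X HX (S k)). pose proof (pos_INR (S k)).
    assert (0 <= deriv_const X) by (unfold deriv_const; pose proof (Rabs_pos (gamma * LL)); nra).
    apply Rmult_le_pos; [apply Rmult_le_pos; nra | apply Rmult_le_pos; [nra | auto]].
  - apply summable_scal, summable_majorant, HX.
  - intros k z Hz. rewrite <- Rmult_assoc.
    apply (channel_term'_le X HX (S k) z); [lia | unfold X; pose proof (Rle_abs M); lra].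
Qed.

Lemma is_Cderive_channel_series z :
  is_Cderive (Cseries channel_series) z (Cseries channel_series' z).
Proof.
  apply is_Cderive_Cseries;
    [intros; apply is_Cderive_channel_term | apply normal_on_discs_channel_series
    | apply normal_on_discs_channel_series'].
Qed.

End SeriesBounds.

(** * Symmetry on the real axis *)

Lemma is_Cderive_pRR0 sigma LL r z : exists l, is_Cderive (pRR0 sigma LL r) z l.
Proof.
  eexists. apply is_Cderive_scal, is_Cderive_mult.
  - apply (is_Cderive_comp Cexp (fun z => Cdiv (Copp (Cadd (RtoC (r * r)) (Cmul z z)))
                                                (RtoC (sigma * sigma * LL)))); [| apply is_Cderive_exp].
    apply (is_Cderive_scal_r (fun z => Copp (Cadd (RtoC (r * r)) (Cmul z z)))).
    apply is_Cderive_opp, is_Cderive_plus; [apply is_Cderive_const | apply is_Cderive_sqr].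
  - apply (is_Cderive_comp (besselI 0) (fun z => Cdiv (Cmul (RtoC (2 * r)) z) (RtoC (sigma * sigma * LL))));
      [| apply is_Cderive_besselI].
    apply (is_Cderive_scal_r (fun z => Cmul (RtoC (2 * r)) z)), is_Cderive_scal, is_Cderive_id.
Qed.

Lemma channel_term_conj gamma LL r phi phi0 al be s m x :
  Cconj (channel_term gamma LL r phi phi0 al be s m (RtoC x))
  = channel_term gamma LL r phi phi0 (Cconj al) (Cconj be) (- s) m (RtoC x).
Proof.
  unfold channel_term, gauss_factor, bessel_factor, phase.
  rewrite !Cconj_mul, Cconj_RtoC, <- !Cexp_conj, <- besselI_conj.
  set (x2 := Cmul (RtoC x) (RtoC x)).
  replace (Cconj (Copp (Cmul al (Cadd (RtoC (r * r)) x2))))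
    with (Copp (Cmul (Cconj al) (Cadd (RtoC (r * r)) x2))) by (apply CC_ext; simpl; ring).
  replace (Cconj (Cmul (Cmul (RtoC 2) be) (Cmul (RtoC x) (RtoC r))))
    with (Cmul (Cmul (RtoC 2) (Cconj be)) (Cmul (RtoC x) (RtoC r))) by (apply CC_ext; simpl; ring).
  replace (Cconj (Cmul (Cmul Cj (RtoC s)) (Csub (RtoC (phi - phi0)) (Cmul (RtoC (gamma * LL)) x2))))
    with (Cmul (Cmul Cj (RtoC (- s))) (Csub (RtoC (phi - phi0)) (Cmul (RtoC (gamma * LL)) x2)))
    by (apply CC_ext; simpl; ring).
  reflexivity.
Qed.

Lemma Im_eq0_of_Cconj w : Cconj w = w -> Im w = 0.
Proof. intro H. apply (f_equal Im) in H. simpl in H. lra. Qed.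

Lemma pRR0_real sigma LL r x : Im (pRR0 sigma LL r (RtoC x)) = 0.
Proof.
  apply Im_eq0_of_Cconj.
  unfold pRR0. rewrite !Cconj_mul, Cconj_RtoC, <- !Cexp_conj, <- besselI_conj.
  set (s2L := RtoC (sigma * sigma * LL)).
  replace (Cconj (Cdiv (Copp (Cadd (RtoC (r * r)) (Cmul (RtoC x) (RtoC x)))) s2L))
    with (Cdiv (Copp (Cadd (RtoC (r * r)) (Cmul (RtoC x) (RtoC x)))) s2L)
    by (unfold s2L; rewrite Cconj_div, Cconj_RtoC; apply (f_equal (fun w => Cdiv w _)), CC_ext; simpl; ring).
  replace (Cconj (Cdiv (Cmul (RtoC (2 * r)) (RtoC x)) s2L))
    with (Cdiv (Cmul (RtoC (2 * r)) (RtoC x)) s2L)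
    by (unfold s2L; rewrite Cconj_div, Cconj_RtoC; apply (f_equal (fun w => Cdiv w _)), CC_ext; simpl; ring).
  reflexivity.
Qed.

Section PZD.
Variables (gamma sigma LL r phi phi0 : R).
Hypotheses (hgamma : 0 < gamma) (hsigma : 0 < sigma) (hL : 0 < LL) (hr : 0 < r).

Definition pzd_pos_series : nat -> CC -> CC :=
  channel_series gamma LL r phi phi0 (a_coef gamma sigma LL) (b_coef gamma sigma LL) INR.
Definition pzd_pos_series' : nat -> CC -> CC :=
  channel_series' gamma LL r phi phi0 (a_coef gamma sigma LL) (b_coef gamma sigma LL) INR.
Definition pzd_neg_series : nat -> CC -> CC :=
  channel_series gamma LL r phi phi0 (fun m => Cconj (a_coef gamma sigma LL m))
    (fun m => Cconj (b_coef gamma sigma LL m)) (fun m => - INR m).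
Definition pzd_neg_series' : nat -> CC -> CC :=
  channel_series' gamma LL r phi phi0 (fun m => Cconj (a_coef gamma sigma LL m))
    (fun m => Cconj (b_coef gamma sigma LL m)) (fun m => - INR m).

Lemma Rabs_INR_le m : Rabs (INR m) <= INR m.
Proof. rewrite Rabs_right; [lra | apply Rle_ge, pos_INR]. Qed.

Lemma Rabs_opp_INR_le m : Rabs (- INR m) <= INR m.
Proof. rewrite Rabs_Ropp. apply Rabs_INR_le. Qed.

Ltac pzd_bounds :=
  auto using Ka_ge0, Kb_ge0, Rabs_INR_le, Rabs_opp_INR_le;
  intros; rewrite ?Cnorm_conj; auto using Cnorm_a_coef_le, Cnorm_b_coef_le.

Lemma normal_on_discs_pzd_pos : normal_on_discs pzd_pos_series.
Proof.
  apply (normal_on_discs_channel_series _ _ _ _ _ hr _ _ _ (Ka gamma sigma LL) (Kb gamma sigma LL));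
    pzd_bounds.
Qed.

Lemma normal_on_discs_pzd_neg : normal_on_discs pzd_neg_series.
Proof.
  apply (normal_on_discs_channel_series _ _ _ _ _ hr _ _ _ (Ka gamma sigma LL) (Kb gamma sigma LL));
    pzd_bounds.
Qed.

Lemma is_Cderive_pzd_pos z : is_Cderive (Cseries pzd_pos_series) z (Cseries pzd_pos_series' z).
Proof.
  apply (is_Cderive_channel_series _ _ _ _ _ hr _ _ _ (Ka gamma sigma LL) (Kb gamma sigma LL));
    pzd_bounds.
Qed.

Lemma is_Cderive_pzd_neg z : is_Cderive (Cseries pzd_neg_series) z (Cseries pzd_neg_series' z).
Proof.
  apply (is_Cderive_channel_series _ _ _ _ _ hr _ _ _ (Ka gamma sigma LL) (Kb gamma sigma LL));
    pzd_bounds.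
Qed.

Lemma Cseries_pzd_neg_conj x :
  Cseries pzd_neg_series (RtoC x) = Cconj (Cseries pzd_pos_series (RtoC x)).
Proof.
  apply Cseries_conj; [apply normal_on_discs_pzd_pos |].
  intro k. symmetry. apply channel_term_conj.
Qed.

End PZD.

Lemma Re_scaled_conj_sum c p S :
  Re (Cmul (RtoC c) (Cadd p (Cadd S (Cconj S)))) = c * Re p + 2 * c * Re S.
Proof. simpl. ring. Qed.

Lemma Im_scaled_conj_sum c p S :
  Im (Cmul (RtoC c) (Cadd p (Cadd S (Cconj S)))) = c * Im p.
Proof. simpl. ring. Qed.

Theorem mainTheorem12 (gamma sigma LL r phi phi0 : R)
  (hgamma : 0 < gamma) (hsigma : 0 < sigma) (hL : 0 < LL) (hr : 0 < r)
  (hphi : 0 <= phi < 2 * PI) (hphi0 : 0 <= phi0 < 2 * PI) :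
  exists (Sp Sn : CC -> CC),
    (forall M, unif_cv_disc (fun N z => psum_pos gamma sigma LL r phi phi0 z N) Sp M) /\
    (forall M, unif_cv_disc (fun N z => psum_neg gamma sigma LL r phi phi0 z N) Sn M) /\
    let s := fun z => Cmul (RtoC (/ (2 * PI)))
                 (Cadd (pRR0 sigma LL r z) (Cadd (Sp z) (Sn z))) in
    entire s /\
    forall r0, 0 <= r0 ->
      Un_cv (pzd_psum gamma sigma LL r phi phi0 r0) (Re (s (RtoC r0))) /\
      Im (s (RtoC r0)) = 0.
Proof.
  pose proof (normal_on_discs_pzd_pos gamma sigma LL r phi phi0 hgamma hsigma hL hr) as Hpos.
  pose proof (normal_on_discs_pzd_neg gamma sigma LL r phi phi0 hgamma hsigma hL hr) as Hneg.
  exists (Cseries (pzd_pos_series gamma sigma LL r phi phi0)),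
         (Cseries (pzd_neg_series gamma sigma LL r phi phi0)).
  split; [exact (Cseries_unif_cv _ Hpos) |]. split; [exact (Cseries_unif_cv _ Hneg) |].
  intro s. split.
  - apply entire_of_is_Cderive. intro z. destruct (is_Cderive_pRR0 sigma LL r z) as [l Hl].
    eexists. apply is_Cderive_scal, is_Cderive_plus; [exact Hl |].
    apply is_Cderive_plus; [apply is_Cderive_pzd_pos | apply is_Cderive_pzd_neg]; auto.
  - (* the two halves of the series are conjugate on the real axis *)
    intros r0 _. unfold s. rewrite Cseries_pzd_neg_conj by auto.
    rewrite Re_scaled_conj_sum, Im_scaled_conj_sum, pRR0_real, Rmult_0_r. split; [| reflexivity].
    assert (HPI : PI <> 0) by (pose proof PI_RGT_0; lra).
    apply (Un_cv_ext (fun N => / (2 * PI) * Re (pRR0 sigma LL r (RtoC r0))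
            + 2 * / (2 * PI) * Re (Cpsum (pzd_pos_series gamma sigma LL r phi phi0) N (RtoC r0)))).
    { intro N. unfold pzd_psum.
      change (psum_pos gamma sigma LL r phi phi0 (RtoC r0) N)
        with (Cpsum (pzd_pos_series gamma sigma LL r phi phi0) N (RtoC r0)).
      field. exact HPI. }
    apply CV_plus; [apply Un_cv_const |]. apply CV_mult; [apply Un_cv_const |].
    apply C_cv_Re, Cseries_cv, Hpos.
Qed.
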